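(* Let $\mathbb{T}^2=[-\pi,\pi]^2$ and let $f_0,g_0$ be smooth $2\pi$-periodic functions of $y$. Then there exist constants $C_0,C_1,C_2>0$ and $\beta_1,\beta_2,\beta_3>0$ depending only on $f_0,g_0$, and a function $U(t,y)$, smooth in $y$, with $\|U\|_{L^\infty}\le 1$ and $\|U(t,\cdot)\|_{H^1_y}\le C_0e^{\beta_1\lceil t\rceil^2}$, such that the solution $\rho$ of \[ \partial_t\rho+U(t,y)\partial_x\rho=0,\qquad \rho(0,x,y)=f_0(y)\sin x+g_0(y)\cos x, \] satisfies $\|\rho(t,\cdot)\|_{H^{-1}}\le C_1e^{-\beta_2 t}$ and $\|\rho(t,\cdot)\|_{H^1}\le C_2e^{\beta_3\lceil t\rceil^2}$ for all $t\ge0$.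
   Context: $\lceil\cdot\rceil$ is the ceiling function. $\|f\|_{H^1}^2=\|f\|_{L^2}^2+\|\nabla f\|_{L^2}^2$ on $\mathbb{T}^2$; for mean-zero $f$, $\|f\|_{H^{-1}}^2=\sum_{\xi\in\mathbb{Z}^2\setminus\{0\}}|\xi|^{-2}|\hat f(\xi)|^2$. *)

From Stdlib Require Import Reals.
From Coquelicot Require Import Coquelicot.
Open Scope R_scope.

(* ceiling function: Int_part is the floor *)
Definition ceil (x : R) : Z := (- Int_part (- x))%Z.

Definition smooth1 (f : R -> R) : Prop :=
  forall (n : nat) (x : R), ex_derive (Derive_n f n) x.

Definition periodic2pi (f : R -> R) : Prop := forall y, f (y + 2 * PI) = f y.

Definition H1_norm_T (f : R -> R) : R :=
  sqrt (RInt (fun y => f y ^ 2 + Derive f y ^ 2) (- PI) PI).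

Definition H1_norm_T2 (f : R -> R -> R) : R :=
  sqrt (RInt (fun x => RInt (fun y =>
          f x y ^ 2
          + Derive (fun x' => f x' y) x ^ 2
          + Derive (fun y' => f x y') y ^ 2) (- PI) PI) (- PI) PI).

(* Fourier coefficient hat f(k,l) = (2 pi)^{-2} \int_{T^2} f(x,y) e^{-i(kx+ly)} dx dy,
   stored as (real part, minus imaginary part); we only need |hat f|^2. *)
Definition fourier_re (f : R -> R -> R) (k l : Z) : R :=
  / (2 * PI) ^ 2 * RInt (fun x => RInt (fun y =>
      f x y * cos (IZR k * x + IZR l * y)) (- PI) PI) (- PI) PI.
Definition fourier_im (f : R -> R -> R) (k l : Z) : R :=
  / (2 * PI) ^ 2 * RInt (fun x => RInt (fun y =>
      f x y * sin (IZR k * x + IZR l * y)) (- PI) PI) (- PI) PI.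
Definition fourier_abs2 (f : R -> R -> R) (k l : Z) : R :=
  fourier_re f k l ^ 2 + fourier_im f k l ^ 2.

Definition Hm1_term (f : R -> R -> R) (k l : Z) : R :=
  if andb (Z.eqb k 0) (Z.eqb l 0) then 0
  else fourier_abs2 f k l / (IZR k ^ 2 + IZR l ^ 2).

(* partial sum over the square max(|k|,|l|) <= N *)
Definition Hm1_partial (f : R -> R -> R) (N : nat) : R :=
  sum_f_R0 (fun i => sum_f_R0 (fun j =>
     Hm1_term f (Z.of_nat i - Z.of_nat N)%Z (Z.of_nat j - Z.of_nat N)%Z)
     (2 * N)) (2 * N).

(* ||f||_{H^{-1}} = sqrt( sum_{xi in Z^2 \ 0} |xi|^{-2} |hat f(xi)|^2 ) in [0, +oo]
   (nonnegative series: limit of the nondecreasing square partial sums) *)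
Definition Hm1_norm (f : R -> R -> R) : Rbar :=
  match Lim_seq (Hm1_partial f) with
  | Finite r => Finite (sqrt r)
  | p_infty => p_infty
  | m_infty => m_infty
  end.

(* rho solves  d_t rho + U(t,y) d_x rho = 0,  rho(0) = rho0, for t >= 0, in the
   sense of characteristics: rho is constant along the flow
   (x,y) -> (x + \int_0^t U(s,y) ds, y). *)
Definition transport_solution (U : R -> R -> R) (rho0 : R -> R -> R)
    (rho : R -> R -> R -> R) : Prop :=
  forall t x y, 0 <= t ->
    rho t (x + RInt (fun s => U s y) 0 t) y = rho0 x y.

(* The velocity is a train of shear pulses: on [j PI, (j+1) PI) it is (1 - cos (N_j y)) / 2, with
   N_(j+1) = 2 * 16^(j+1) * N_j, so that N_j <= 64^(j^2).  The solution is
   rho = f0 sin (x - Phi) + g0 cos (x - Phi) with Phi = int_0^t U, so rho only has the x-modes +-1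
   and its Fourier coefficients are controlled by the oscillatory integrals |int a e^(i (Phi -+ l y))|,
   a in {f0, g0}.  A completed pulse adds the phase PI/2 - (PI/2) cos (N_j y); as N_j dominates the
   Lipschitz constants of everything built before, a quantitative Riemann-Lebesgue lemma replaces
   this factor by its mean J0(PI/2) <= 3/4, so every epoch contracts the oscillatory integrals by 7/8
   up to O(16^-j).  The coefficients are thus bounded both uniformly and by (7/8)^j (alpha + gamma |l|);
   weighting by 1 / (1 + l^2) and telescoping arctangents gives ||rho||_(H^-1)^2 = O((7/8)^j), an
   exponential decay, while ||U||_(H^1) and ||rho||_(H^1) are O(N_j) = O(exp (ln 64 ceil(t)^2)). *)

From Stdlib Require Import Reals Lra Lia ZArith FunctionalExtensionality.
From Coquelicot Require Import Coquelicot.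
Open Scope R_scope.

(** * Continuity and integration on the circle *)

Definition continuous_R (f : R -> R) : Prop := forall x, continuous f x.

Lemma continuous_R_const c : continuous_R (fun _ => c).
Proof. intros x; apply continuous_const. Qed.

Lemma continuous_R_id : continuous_R (fun x => x).
Proof. intros x; apply continuous_id. Qed.

Lemma continuous_R_plus f g :
  continuous_R f -> continuous_R g -> continuous_R (fun x => f x + g x).
Proof. intros Hf Hg x; apply (continuous_plus f g); auto. Qed.

Lemma continuous_R_minus f g :
  continuous_R f -> continuous_R g -> continuous_R (fun x => f x - g x).
Proof. intros Hf Hg x; apply (continuous_minus f g); auto. Qed.

Lemma continuous_R_opp f : continuous_R f -> continuous_R (fun x => - f x).
Proof. intros Hf x; apply (continuous_opp f); auto. Qed.

Lemma continuous_R_mult f g :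
  continuous_R f -> continuous_R g -> continuous_R (fun x => f x * g x).
Proof. intros Hf Hg x; apply (continuous_mult f g); auto. Qed.

Lemma continuous_R_comp f g :
  continuous_R f -> continuous_R g -> continuous_R (fun x => g (f x)).
Proof. intros Hf Hg x; apply (continuous_comp f g); auto. Qed.

Lemma continuous_R_of_derive f : (forall x, ex_derive f x) -> continuous_R f.
Proof.
  intros H x; apply (ex_derive_continuous (K := R_AbsRing) (V := R_NormedModule)); auto.
Qed.

Lemma continuous_R_cos f : continuous_R f -> continuous_R (fun x => cos (f x)).
Proof.
  intros Hf; apply (continuous_R_comp f cos); auto.
  apply continuous_R_of_derive; intros; auto_derive; auto.
Qed.

Lemma continuous_R_sin f : continuous_R f -> continuous_R (fun x => sin (f x)).
Proof.
  intros Hf; apply (continuous_R_comp f sin); auto.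
  apply continuous_R_of_derive; intros; auto_derive; auto.
Qed.

Lemma continuous_R_pow f n : continuous_R f -> continuous_R (fun x => f x ^ n).
Proof.
  intros Hf; apply (continuous_R_comp f (fun u => u ^ n)); auto.
  apply continuous_R_of_derive; intros; auto_derive; auto.
Qed.

Lemma continuous_R_div_const f c : continuous_R f -> continuous_R (fun x => f x / c).
Proof. intros Hf; apply (continuous_R_mult f (fun _ => / c)); auto using continuous_R_const. Qed.

Ltac solve_continuous :=
  repeat match goal with
  | |- continuous_R (fun _ => ?c) => apply (continuous_R_const c)
  | H : continuous_R ?f |- continuous_R ?f => exact H
  | H : continuous_R ?f |- continuous_R (fun x => ?f x) => exact H
  | |- continuous_R (fun x => x) => apply continuous_R_id
  | |- continuous_R (Rmult ?c) => apply (continuous_R_mult (fun _ => c) (fun x => x))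
  | |- continuous_R (fun x => @?f x + @?g x) => apply (continuous_R_plus f g)
  | |- continuous_R (fun x => @?f x - @?g x) => apply (continuous_R_minus f g)
  | |- continuous_R (fun x => - @?f x) => apply (continuous_R_opp f)
  | |- continuous_R (fun x => @?f x * @?g x) => apply (continuous_R_mult f g)
  | |- continuous_R (fun x => @?f x / ?c) => apply (continuous_R_div_const f c)
  | |- continuous_R (fun x => @?f x ^ ?n) => apply (continuous_R_pow f n)
  | |- continuous_R (fun x => cos (@?f x)) => apply (continuous_R_cos f)
  | |- continuous_R (fun x => sin (@?f x)) => apply (continuous_R_sin f)
  | H : continuous_R ?g |- continuous_R (fun x => ?g (@?f x)) => apply (continuous_R_comp f g); [| exact H]
  end.

Lemma ex_RInt_continuous_R f a b : continuous_R f -> ex_RInt f a b.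
Proof.
  intros Hf; apply (ex_RInt_continuous (V := R_CompleteNormedModule)); intros; apply Hf.
Qed.

Ltac solve_ex_RInt := apply ex_RInt_continuous_R; solve_continuous.

Lemma continuous_R_continuity_pt f x : continuous_R f -> continuity_pt f x.
Proof. intros Hf; apply continuity_pt_filterlim, Hf. Qed.

Lemma continuous_R_bounded f a b :
  continuous_R f -> exists M, 0 <= M /\ forall y, a <= y <= b -> Rabs (f y) <= M.
Proof.
  intros Hf. destruct (Rle_dec a b) as [Hab|Hab].
  - destruct (continuity_ab_maj (fun x => Rabs (f x)) a b) as [m [Hm _]]; auto.
    + intros c _. apply (continuity_pt_comp f Rabs).
      * apply continuous_R_continuity_pt; auto.
      * apply Rcontinuity_abs.
    + exists (Rabs (f m)). split; [apply Rabs_pos | auto].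
  - exists 0. split; [lra | intros; lra].
Qed.

(** Integration on [R], stated with [+], [*] instead of the module operations. *)
Lemma RInt_plus_R f g a b : ex_RInt f a b -> ex_RInt g a b ->
  RInt (fun x => f x + g x) a b = RInt f a b + RInt g a b.
Proof. intros; apply (RInt_plus f g a b); auto. Qed.

Lemma RInt_minus_R f g a b : ex_RInt f a b -> ex_RInt g a b ->
  RInt (fun x => f x - g x) a b = RInt f a b - RInt g a b.
Proof. intros; apply (RInt_minus f g a b); auto. Qed.

Lemma RInt_scal_R f a b c : ex_RInt f a b ->
  RInt (fun x => c * f x) a b = c * RInt f a b.
Proof. intros; apply (RInt_scal f a b c); auto. Qed.

Lemma RInt_opp_R f a b : ex_RInt f a b ->
  RInt (fun x => - f x) a b = - RInt f a b.
Proof. intros; apply (RInt_opp f a b); auto. Qed.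

Lemma RInt_Chasles_R f a b c : ex_RInt f a b -> ex_RInt f b c ->
  RInt f a b + RInt f b c = RInt f a c.
Proof. intros; apply (RInt_Chasles f a b c); auto. Qed.

Lemma RInt_const_R a b c : RInt (fun _ => c) a b = (b - a) * c.
Proof. rewrite RInt_const; reflexivity. Qed.

Lemma RInt_point_R f a : RInt f a a = 0.
Proof. exact (RInt_point (V := R_CompleteNormedModule) a f). Qed.

Lemma abs_RInt_le_const_R f a b M : a <= b -> continuous_R f ->
  (forall y, a <= y <= b -> Rabs (f y) <= M) -> Rabs (RInt f a b) <= (b - a) * M.
Proof. intros Hab Hf HM; apply abs_RInt_le_const; auto using ex_RInt_continuous_R. Qed.

Lemma RInt_comp_affine_R (g : R -> R) u v a b : u <> 0 -> continuous_R g ->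
  RInt (fun y => g (u * y + v)) a b = / u * RInt g (u * a + v) (u * b + v).
Proof.
  intros Hu Hg.
  rewrite <- (RInt_comp_lin g u v a b) by (apply ex_RInt_continuous_R; auto).
  change (RInt (fun y => scal u (g (u * y + v))) a b) with (RInt (fun y => u * g (u * y + v)) a b).
  rewrite RInt_scal_R by (apply ex_RInt_continuous_R, (continuous_R_comp (fun y => u * y + v)); solve_continuous).
  generalize (RInt (fun y => g (u * y + v)) a b); intros r; simpl in r |- *; field; auto.
Qed.

Lemma RInt_shift_R (g : R -> R) s a b : continuous_R g ->
  RInt (fun y => g (y + s)) a b = RInt g (a + s) (b + s).
Proof.
  intros Hg.
  rewrite (RInt_ext _ (fun y => g (1 * y + s))) by (intros; f_equal; ring).
  rewrite RInt_comp_affine_R by (auto; lra).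
  rewrite !Rmult_1_l, Rinv_1, Rmult_1_l; reflexivity.
Qed.

Lemma RInt_periodic (g : R -> R) c : continuous_R g -> (forall x, g (x + 2 * PI) = g x) ->
  RInt g c (c + 2 * PI) = RInt g (- PI) PI.
Proof.
  intros Hg Hp.
  assert (Hint : forall a b, ex_RInt g a b) by (intros; apply ex_RInt_continuous_R; auto).
  rewrite <- (RInt_Chasles_R g c (- PI) (c + 2 * PI)), <- (RInt_Chasles_R g (- PI) PI) by auto.
  replace (RInt g PI (c + 2 * PI)) with (RInt g (- PI) c).
  - pose proof (RInt_Chasles_R g c (- PI) c (Hint _ _) (Hint _ _)) as Hc.
    rewrite RInt_point_R in Hc. lra.
  - rewrite <- (RInt_ext (fun y => g (y + 2 * PI))) by auto.
    rewrite RInt_shift_R by auto. f_equal; ring.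
Qed.

Lemma RInt_dilate_periodic (g : R -> R) (n : nat) a : (n >= 1)%nat -> continuous_R g ->
  (forall x, g (x + 2 * PI) = g x) ->
  RInt (fun y => g (INR n * y)) a (a + 2 * PI / INR n) = / INR n * RInt g (- PI) PI.
Proof.
  intros Hn Hg Hp. assert (HN : 0 < INR n) by (apply lt_0_INR; lia).
  rewrite (RInt_ext _ (fun y => g (INR n * y + 0))) by (intros; f_equal; ring).
  rewrite RInt_comp_affine_R by (auto; lra).
  replace (INR n * (a + 2 * PI / INR n) + 0) with (INR n * a + 0 + 2 * PI) by (field; lra).
  rewrite RInt_periodic; auto.
Qed.

Lemma Rabs_sub_le_of_derive f df K y z :
  (forall x, is_derive f x (df x)) ->
  (forall x, Rmin z y <= x <= Rmax z y -> Rabs (df x) <= K) ->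
  Rabs (f y - f z) <= K * Rabs (y - z).
Proof.
  intros Hd HK.
  destruct (MVT_gen f z y df) as [c [Hc ->]]; auto.
  - intros x _. apply continuous_R_continuity_pt, continuous_R_of_derive.
    intros; eexists; apply Hd.
  - rewrite Rabs_mult. apply Rmult_le_compat_r; auto using Rabs_pos.
Qed.

Lemma Rabs_cos_sub_le p q : Rabs (cos p - cos q) <= Rabs (p - q).
Proof.
  rewrite <- (Rmult_1_l (Rabs (p - q))).
  apply (Rabs_sub_le_of_derive cos (fun x => - sin x)).
  - intros; auto_derive; auto; ring.
  - intros; rewrite Rabs_Ropp; apply Rabs_le, SIN_bound.
Qed.

Lemma Rabs_sin_sub_le p q : Rabs (sin p - sin q) <= Rabs (p - q).
Proof.
  rewrite <- (Rmult_1_l (Rabs (p - q))).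
  apply (Rabs_sub_le_of_derive sin cos).
  - intros; auto_derive; auto; ring.
  - intros; apply Rabs_le, COS_bound.
Qed.

Definition lipschitz_T (f : R -> R) (K : R) : Prop :=
  forall y z, - PI <= y <= PI -> - PI <= z <= PI -> Rabs (f y - f z) <= K * Rabs (y - z).

Definition bounded_T (f : R -> R) (M : R) : Prop :=
  forall y, - PI <= y <= PI -> Rabs (f y) <= M.

Lemma lipschitz_T_of_is_derive f df K :
  (forall x, is_derive f x (df x)) -> bounded_T df K -> lipschitz_T f K.
Proof.
  intros Hd HK y z Hy Hz. apply (Rabs_sub_le_of_derive f df); auto.
  intros x Hx; apply HK. split.
  - apply Rle_trans with (Rmin z y); [apply Rmin_glb |]; lra.
  - apply Rle_trans with (Rmax z y); [| apply Rmax_lub]; lra.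
Qed.

Lemma cos_add_2PI x : cos (x + 2 * PI) = cos x.
Proof. rewrite cos_plus, cos_2PI, sin_2PI; ring. Qed.

Lemma exp_le_compat x y : x <= y -> exp x <= exp y.
Proof. intros [H | ->]; [apply Rlt_le, exp_increasing | apply Rle_refl]; auto. Qed.

(** * Averaging against fast oscillations *)

Definition mean_T (g : R -> R) : R := RInt g (- PI) PI / (2 * PI).

Lemma Rabs_mean_T_le g : continuous_R g -> (forall x, Rabs (g x) <= 1) -> Rabs (mean_T g) <= 1.
Proof.
  intros Hg Hb. pose proof PI_RGT_0. unfold mean_T.
  assert (Hint : Rabs (RInt g (- PI) PI) <= (PI - - PI) * 1)
    by (apply abs_RInt_le_const_R; auto; lra).
  unfold Rdiv; rewrite Rabs_mult, Rabs_inv, (Rabs_right (2 * PI)) by lra.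
  apply (Rmult_le_reg_r (2 * PI)); [lra|]. rewrite Rmult_assoc, Rinv_l by lra. lra.
Qed.

Section Averaging.

Variables (w g : R -> R) (K : R) (n : nat).
Hypotheses (Hn : (n >= 1)%nat) (HK : 0 <= K) (Hw : continuous_R w) (Hg : continuous_R g)
  (Hper : forall x, g (x + 2 * PI) = g x) (Hg1 : forall x, Rabs (g x) <= 1)
  (Hlip : lipschitz_T w K).

Let h := 2 * PI / INR n.
Let defect y := w y * g (INR n * y) - mean_T g * w y.

Let continuous_defect : continuous_R defect.
Proof. unfold defect; solve_continuous. Qed.

(* On a period cell the mean of [g] cancels exactly, so only the oscillation of [w] remains. *)
Lemma RInt_defect_cell a : - PI <= a -> a + h <= PI ->
  Rabs (RInt defect a (a + h)) <= h * (2 * K * h).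
Proof.
  intros Ha Hah. pose proof PI_RGT_0.
  assert (HN : 0 < INR n) by (apply lt_0_INR; lia).
  assert (Hh : 0 < h) by (apply Rdiv_lt_0_compat; lra).
  assert (Hc : Rabs (mean_T g) <= 1) by (apply Rabs_mean_T_le; auto).
  assert (HgN : continuous_R (fun y => g (INR n * y)))
    by solve_continuous.
  set (D := fun y => (w y - w a) * (g (INR n * y) - mean_T g)).
  assert (HD : continuous_R D) by (unfold D; solve_continuous).
  assert (Ecell : RInt defect a (a + h) = RInt D a (a + h)).
  { rewrite (RInt_ext defect (fun y => D y + w a * (g (INR n * y) - mean_T g)))
      by (intros; unfold defect, D; simpl; ring).
    rewrite RInt_plus_R, RInt_scal_R, RInt_minus_R by solve_ex_RInt.
    unfold h at 2. rewrite RInt_dilate_periodic, RInt_const_R by auto.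
    replace (/ INR n * RInt g (- PI) PI - (a + h - a) * mean_T g) with 0
      by (unfold mean_T, h; field; lra).
    simpl; ring. }
  rewrite Ecell. replace (h * (2 * K * h)) with ((a + h - a) * (K * h * 2)) by ring.
  apply abs_RInt_le_const_R; [lra | exact HD |].
  intros t Ht. unfold D. rewrite Rabs_mult.
  apply Rmult_le_compat; try apply Rabs_pos.
  - eapply Rle_trans; [apply Hlip; lra |].
    apply Rmult_le_compat_l; auto. rewrite Rabs_right; lra.
  - eapply Rle_trans; [apply Rabs_triang |]. rewrite Rabs_Ropp.
    specialize (Hg1 (INR n * t)). lra.
Qed.

Lemma RInt_mul_dilate_periodic :
  Rabs (RInt (fun y => w y * g (INR n * y)) (- PI) PI - mean_T g * RInt w (- PI) PI)
    <= 8 * PI ^ 2 * K / INR n.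
Proof.
  pose proof PI_RGT_0.
  assert (HN : 0 < INR n) by (apply lt_0_INR; lia).
  assert (Hh : 0 < h) by (apply Rdiv_lt_0_compat; lra).
  assert (Hcells : forall m, (m <= n)%nat ->
    Rabs (RInt defect (- PI) (- PI + INR m * h)) <= INR m * (2 * K * h ^ 2)).
  { induction m as [|m IH]; intros Hm.
    - change (INR 0) with 0. rewrite !Rmult_0_l, Rplus_0_r, RInt_point_R, Rabs_R0. lra.
    - assert (HmN : INR (S m) <= INR n) by (apply le_INR; lia).
      assert (Hmh : INR n * h = 2 * PI) by (unfold h; field; lra).
      rewrite S_INR in HmN |- *. pose proof (pos_INR m).
      assert ((INR m + 1) * h <= 2 * PI) by (rewrite <- Hmh; apply Rmult_le_compat_r; lra).
      assert (0 <= INR m * h) by (apply Rmult_le_pos; lra).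
      replace (- PI + (INR m + 1) * h) with ((- PI + INR m * h) + h) by ring.
      rewrite <- (RInt_Chasles_R defect (- PI) (- PI + INR m * h))
        by (apply ex_RInt_continuous_R, continuous_defect).
      eapply Rle_trans; [apply Rabs_triang |].
      pose proof (IH ltac:(lia)).
      assert (Hcell : Rabs (RInt defect (- PI + INR m * h) (- PI + INR m * h + h))
                      <= h * (2 * K * h)) by (apply RInt_defect_cell; lra).
      nra. }
  specialize (Hcells n (le_n n)).
  replace (- PI + INR n * h) with PI in Hcells by (unfold h; field; lra).
  unfold defect in Hcells.
  rewrite RInt_minus_R, RInt_scal_R in Hcells by solve_ex_RInt.
  eapply Rle_trans; [apply Hcells |]. right. unfold h. field. lra.
Qed.

End Averaging.

Lemma PI_gt_3 : 3 < PI.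
Proof. pose proof PI2_3_2; lra. Qed.

Lemma cos_half_pi_mul_le c : -1 <= c <= 1 -> cos (PI / 2 * c) <= 1 - c ^ 2 / 2.
Proof.
  intros Hc. pose proof PI_gt_3. pose proof PI_4.
  destruct (cos_bound (PI / 2 * c) 0) as [_ Hub]; [nra | nra |].
  unfold cos_approx, cos_term in Hub; simpl in Hub.
  (* Taylor: [cos a <= 1 - a^2/2 + a^4/24], and [pi^2/8 - pi^4/384 >= 1/2] for [3 < pi <= 4]. *)
  assert (Hc2 : 0 <= c ^ 2 <= 1) by nra.
  assert (Hx : 9 <= PI ^ 2 <= 16) by nra.
  assert (Hx2 : PI ^ 4 <= 25 * PI ^ 2 - 144) by nra.
  assert (Hpi : PI ^ 4 * c ^ 2 <= PI ^ 4 * 1) by (apply Rmult_le_compat_l; nra).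
  nra.
Qed.

Definition bessel_J0 (b : R) : R := mean_T (fun s => cos (b * cos s)).

Lemma Rabs_bessel_J0_le_1 b : Rabs (bessel_J0 b) <= 1.
Proof.
  apply Rabs_mean_T_le; [solve_continuous | intros; apply Rabs_le, COS_bound].
Qed.

Lemma RInt_cos_sq : RInt (fun s => cos s ^ 2) (- PI) PI = PI.
Proof.
  assert (H : is_RInt (fun s => cos s ^ 2) (- PI) PI
     (minus ((fun s => s / 2 + sin (2 * s) / 4) PI) ((fun s => s / 2 + sin (2 * s) / 4) (- PI)))).
  { apply (is_RInt_derive (V := R_CompleteNormedModule) (fun s => s / 2 + sin (2 * s) / 4)).
    - intros; auto_derive; auto. rewrite cos_2a_cos. field.
    - intros; apply continuous_R_of_derive; intros; auto_derive; auto. }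
  rewrite (is_RInt_unique _ _ _ _ H). unfold minus, plus, opp; simpl.
  replace (2 * - PI) with (- (2 * PI)) by ring. rewrite sin_neg, sin_2PI. field.
Qed.

Lemma Rabs_bessel_J0_half_pi : Rabs (bessel_J0 (- (PI / 2))) <= 3 / 4.
Proof.
  pose proof PI_RGT_0. unfold bessel_J0, mean_T.
  set (f := fun s => cos (- (PI / 2) * cos s)).
  assert (Hf : continuous_R f) by (unfold f; solve_continuous).
  assert (Hpos : 0 <= RInt f (- PI) PI).
  { rewrite <- (Rmult_0_r (PI - - PI)), <- RInt_const_R.
    apply RInt_le; [lra | apply ex_RInt_continuous_R; solve_continuous | solve_ex_RInt |].
    intros x _. unfold f. rewrite Ropp_mult_distr_l_reverse, cos_neg.
    pose proof (COS_bound x). apply cos_ge_0; nra. }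
  assert (Hle : RInt f (- PI) PI <= RInt (fun s => 1 - cos s ^ 2 / 2) (- PI) PI).
  { apply RInt_le; [lra | solve_ex_RInt | solve_ex_RInt |].
    intros x _. unfold f. rewrite Ropp_mult_distr_l_reverse, cos_neg.
    apply cos_half_pi_mul_le, COS_bound. }
  rewrite RInt_minus_R, RInt_const_R in Hle by solve_ex_RInt.
  rewrite (RInt_ext (fun s => cos s ^ 2 / 2) (fun s => / 2 * cos s ^ 2)) in Hle
    by (intros; simpl; field).
  rewrite RInt_scal_R, RInt_cos_sq in Hle by solve_ex_RInt.
  rewrite Rabs_right.
  - apply (Rmult_le_reg_r (2 * PI)); [lra |]. unfold Rdiv. rewrite Rmult_assoc, Rinv_l by lra. lra.
  - apply Rle_ge, Rmult_le_pos; auto. apply Rlt_le, Rinv_0_lt_compat; lra.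
Qed.

(* [s |-> s + PI] maps [cos s] to [- cos s], so the integrand is odd over a period. *)
Lemma RInt_sin_mul_cos b : RInt (fun s => sin (b * cos s)) (- PI) PI = 0.
Proof.
  set (f := fun s => sin (b * cos s)).
  assert (Hf : continuous_R f) by (unfold f; solve_continuous).
  rewrite <- (RInt_Chasles_R f (- PI) 0 PI) by solve_ex_RInt.
  assert (E : RInt f 0 PI = - RInt f (- PI) 0).
  { pose proof (RInt_shift_R f PI (- PI) 0 Hf) as Es.
    replace (- PI + PI) with 0 in Es by ring. rewrite Rplus_0_l in Es. rewrite <- Es.
    rewrite <- RInt_opp_R by solve_ex_RInt.
    apply RInt_ext. intros x _. unfold f. rewrite neg_cos.
    replace (b * - cos x) with (- (b * cos x)) by ring. apply sin_neg. }
  rewrite E; simpl; ring.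
Qed.

(** * Oscillatory integrals *)

(** [osc_norm a psi] is the modulus of the oscillatory integral [\int_T a e^{i psi}]. *)
Definition cos_moment (a psi : R -> R) : R := RInt (fun y => a y * cos (psi y)) (- PI) PI.
Definition sin_moment (a psi : R -> R) : R := RInt (fun y => a y * sin (psi y)) (- PI) PI.
Definition osc_norm (a psi : R -> R) : R := sqrt (cos_moment a psi ^ 2 + sin_moment a psi ^ 2).

Lemma Rabs_sq x : Rabs x ^ 2 = x ^ 2.
Proof. unfold Rabs; destruct (Rcase_abs x); ring. Qed.

Lemma Rabs_le_sqrt_sum_sq x y : Rabs x <= sqrt (x ^ 2 + y ^ 2).
Proof.
  rewrite <- (sqrt_pow2 (Rabs x)) by apply Rabs_pos. apply sqrt_le_1_alt.
  rewrite Rabs_sq. nra.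
Qed.

Lemma sqrt_sum_sq_add_le x y e1 e2 :
  sqrt ((x + e1) ^ 2 + (y + e2) ^ 2) <= sqrt (x ^ 2 + y ^ 2) + Rabs e1 + Rabs e2.
Proof.
  set (S := sqrt (x ^ 2 + y ^ 2)). assert (HS : 0 <= S) by apply sqrt_pos.
  assert (Hx : Rabs x <= S) by apply Rabs_le_sqrt_sum_sq.
  assert (Hy : Rabs y <= S) by (unfold S; rewrite Rplus_comm; apply Rabs_le_sqrt_sum_sq).
  assert (HS2 : S * S = x ^ 2 + y ^ 2) by (apply sqrt_sqrt; nra).
  pose proof (Rabs_pos e1); pose proof (Rabs_pos e2).
  rewrite <- (sqrt_pow2 (S + Rabs e1 + Rabs e2)) by lra.
  apply sqrt_le_1_alt.
  assert (x * e1 <= S * Rabs e1).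
  { eapply Rle_trans; [apply Rle_abs |]. rewrite Rabs_mult. apply Rmult_le_compat_r; lra. }
  assert (y * e2 <= S * Rabs e2).
  { eapply Rle_trans; [apply Rle_abs |]. rewrite Rabs_mult. apply Rmult_le_compat_r; lra. }
  pose proof (Rabs_sq e1); pose proof (Rabs_sq e2). nra.
Qed.

Lemma Rabs_cos_moment_le a psi : Rabs (cos_moment a psi) <= osc_norm a psi.
Proof. apply Rabs_le_sqrt_sum_sq. Qed.

Lemma Rabs_sin_moment_le a psi : Rabs (sin_moment a psi) <= osc_norm a psi.
Proof. unfold osc_norm; rewrite Rplus_comm; apply Rabs_le_sqrt_sum_sq. Qed.

Lemma osc_norm_ge_0 a psi : 0 <= osc_norm a psi.
Proof. apply sqrt_pos. Qed.

Lemma osc_norm_ext a psi1 psi2 : (forall y, psi1 y = psi2 y) -> osc_norm a psi1 = osc_norm a psi2.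
Proof.
  intros H. unfold osc_norm, cos_moment, sin_moment.
  rewrite (RInt_ext (fun y => a y * cos (psi1 y)) (fun y => a y * cos (psi2 y)))
    by (intros; rewrite H; auto).
  rewrite (RInt_ext (fun y => a y * sin (psi1 y)) (fun y => a y * sin (psi2 y)))
    by (intros; rewrite H; auto).
  reflexivity.
Qed.

Lemma osc_norm_le a psi M : continuous_R a -> continuous_R psi -> bounded_T a M ->
  osc_norm a psi <= 4 * PI * M.
Proof.
  intros Ha Hp Hb. pose proof PI_RGT_0.
  assert (Hmoment : forall trig : R -> R, continuous_R trig -> (forall x, Rabs (trig x) <= 1) ->
            Rabs (RInt (fun y => a y * trig (psi y)) (- PI) PI) <= (PI - - PI) * M).
  { intros trig Ht Ht1. apply abs_RInt_le_const_R; [lra | solve_continuous |].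
    intros y Hy. rewrite Rabs_mult. specialize (Hb y Hy). specialize (Ht1 (psi y)).
    pose proof (Rabs_pos (a y)). pose proof (Rabs_pos (trig (psi y))). nra. }
  pose proof (Hmoment cos ltac:(intros x; apply continuous_R_cos, continuous_R_id)
                (fun x => Rabs_le _ _ (COS_bound x))) as Hc.
  pose proof (Hmoment sin ltac:(intros x; apply continuous_R_sin, continuous_R_id)
                (fun x => Rabs_le _ _ (SIN_bound x))) as Hs.
  fold (cos_moment a psi) in Hc. fold (sin_moment a psi) in Hs.
  unfold osc_norm. apply Rle_trans with (Rabs (cos_moment a psi) + Rabs (sin_moment a psi)); [| lra].
  pose proof (Rabs_pos (cos_moment a psi)); pose proof (Rabs_pos (sin_moment a psi)).
  rewrite <- (sqrt_pow2 (Rabs (cos_moment a psi) + Rabs (sin_moment a psi))) by lra.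
  apply sqrt_le_1_alt. rewrite <- (Rabs_sq (cos_moment a psi)), <- (Rabs_sq (sin_moment a psi)). nra.
Qed.

Lemma osc_norm_add_const a psi c : continuous_R a -> continuous_R psi ->
  osc_norm a (fun y => psi y + c) = osc_norm a psi.
Proof.
  intros Ha Hp. unfold osc_norm.
  assert (Ec : cos_moment a (fun y => psi y + c) = cos c * cos_moment a psi - sin c * sin_moment a psi).
  { unfold cos_moment, sin_moment.
    rewrite <- !RInt_scal_R, <- RInt_minus_R by solve_ex_RInt.
    apply RInt_ext; intros. rewrite cos_plus. simpl; ring. }
  assert (Es : sin_moment a (fun y => psi y + c) = sin c * cos_moment a psi + cos c * sin_moment a psi).
  { unfold cos_moment, sin_moment.
    rewrite <- !RInt_scal_R, <- RInt_plus_R by solve_ex_RInt.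
    apply RInt_ext; intros. rewrite sin_plus. simpl; ring. }
  rewrite Ec, Es. f_equal. pose proof (sin2_cos2 c). unfold Rsqr in *. nra.
Qed.

Lemma lipschitz_T_mul a b Ka Ma Kb Mb : 0 <= Ma -> 0 <= Kb ->
  lipschitz_T a Ka -> bounded_T a Ma -> lipschitz_T b Kb -> bounded_T b Mb ->
  lipschitz_T (fun y => a y * b y) (Ka * Mb + Ma * Kb).
Proof.
  intros HMa HKb La Ba Lb Bb y z Hy Hz.
  replace (a y * b y - a z * b z) with ((a y - a z) * b y + a z * (b y - b z)) by ring.
  eapply Rle_trans; [apply Rabs_triang |]. rewrite !Rabs_mult.
  specialize (La y z Hy Hz). specialize (Lb y z Hy Hz). specialize (Ba z Hz). specialize (Bb y Hy).
  pose proof (Rabs_pos (a y - a z)). pose proof (Rabs_pos (b y)). pose proof (Rabs_pos (a z)).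
  pose proof (Rabs_pos (b y - b z)). pose proof (Rabs_pos (y - z)).
  assert (Rabs (a y - a z) * Rabs (b y) <= Ka * Rabs (y - z) * Mb) by (apply Rmult_le_compat; lra).
  assert (Rabs (a z) * Rabs (b y - b z) <= Ma * (Kb * Rabs (y - z))) by (apply Rmult_le_compat; lra).
  nra.
Qed.

Lemma lipschitz_T_cos psi L : lipschitz_T psi L -> lipschitz_T (fun y => cos (psi y)) L.
Proof. intros Hp y z Hy Hz. eapply Rle_trans; [apply Rabs_cos_sub_le | apply Hp; auto]. Qed.

Lemma lipschitz_T_sin psi L : lipschitz_T psi L -> lipschitz_T (fun y => sin (psi y)) L.
Proof. intros Hp y z Hy Hz. eapply Rle_trans; [apply Rabs_sin_sub_le | apply Hp; auto]. Qed.

Lemma bounded_T_cos psi : bounded_T (fun y => cos (psi y)) 1.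
Proof. intros y _; apply Rabs_le, COS_bound. Qed.

Lemma bounded_T_sin psi : bounded_T (fun y => sin (psi y)) 1.
Proof. intros y _; apply Rabs_le, SIN_bound. Qed.

Lemma RInt_mul_bessel_phase u K (n : nat) b :
  (n >= 1)%nat -> 0 <= K -> continuous_R u -> lipschitz_T u K ->
  Rabs (RInt (fun y => u y * cos (b * cos (INR n * y))) (- PI) PI - bessel_J0 b * RInt u (- PI) PI)
    <= 8 * PI ^ 2 * K / INR n /\
  Rabs (RInt (fun y => u y * sin (b * cos (INR n * y))) (- PI) PI) <= 8 * PI ^ 2 * K / INR n.
Proof.
  intros Hn HK Hu Lu. split.
  - apply (RInt_mul_dilate_periodic u (fun s => cos (b * cos s))); auto.
    + solve_continuous.
    + intros x; rewrite cos_add_2PI; reflexivity.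
    + intros x; apply Rabs_le, COS_bound.
  - assert (Hmean : mean_T (fun s => sin (b * cos s)) = 0)
      by (unfold mean_T; rewrite RInt_sin_mul_cos; field; apply PI_neq0).
    pose proof (RInt_mul_dilate_periodic u (fun s => sin (b * cos s)) K n) as H.
    rewrite Hmean, Rmult_0_l, Rminus_0_r in H. apply H; auto.
    + solve_continuous.
    + intros x; rewrite cos_add_2PI; reflexivity.
    + intros x; apply Rabs_le, SIN_bound.
Qed.

(* Averaging [cos (b cos (n y))] and [sin (b cos (n y))] against the Lipschitz amplitudes
   [a cos psi], [a sin psi] replaces them by their means [J0 b] and [0]. *)
Lemma osc_norm_add_cos_phase a psi Ka Ma L (n : nat) b :
  (n >= 1)%nat -> continuous_R a -> continuous_R psi -> 0 <= Ka -> 0 <= Ma -> 0 <= L ->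
  lipschitz_T a Ka -> lipschitz_T psi L -> bounded_T a Ma ->
  osc_norm a (fun y => psi y + b * cos (INR n * y)) <=
    Rabs (bessel_J0 b) * osc_norm a psi + 32 * PI ^ 2 * (Ka + Ma * L) / INR n.
Proof.
  intros Hn Ha Hp HKa HMa HL La Lp Ba.
  set (K := Ka + Ma * L). assert (HK : 0 <= K) by (unfold K; nra).
  set (u := fun y => a y * cos (psi y)). set (v := fun y => a y * sin (psi y)).
  assert (Lu : lipschitz_T u K).
  { unfold K; rewrite <- (Rmult_1_r Ka).
    apply lipschitz_T_mul; auto using lipschitz_T_cos, bounded_T_cos. }
  assert (Lv : lipschitz_T v K).
  { unfold K; rewrite <- (Rmult_1_r Ka).
    apply lipschitz_T_mul; auto using lipschitz_T_sin, bounded_T_sin. }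
  assert (Hu : continuous_R u) by (unfold u; solve_continuous).
  assert (Hv : continuous_R v) by (unfold v; solve_continuous).
  destruct (RInt_mul_bessel_phase u K n b Hn HK Hu Lu) as [B1 B3].
  destruct (RInt_mul_bessel_phase v K n b Hn HK Hv Lv) as [B4 B2].
  change (RInt u (- PI) PI) with (cos_moment a psi) in B1.
  change (RInt v (- PI) PI) with (sin_moment a psi) in B4.
  set (e := 8 * PI ^ 2 * K / INR n) in *.
  set (X1 := RInt (fun y => u y * cos (b * cos (INR n * y))) (- PI) PI) in *.
  set (X2 := RInt (fun y => v y * sin (b * cos (INR n * y))) (- PI) PI) in *.
  set (X3 := RInt (fun y => u y * sin (b * cos (INR n * y))) (- PI) PI) in *.
  set (X4 := RInt (fun y => v y * cos (b * cos (INR n * y))) (- PI) PI) in *.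
  assert (Ec : cos_moment a (fun y => psi y + b * cos (INR n * y)) = X1 - X2).
  { unfold cos_moment, X1, X2. rewrite <- RInt_minus_R by solve_ex_RInt.
    apply RInt_ext; intros; unfold u, v. rewrite cos_plus. simpl; ring. }
  assert (Es : sin_moment a (fun y => psi y + b * cos (INR n * y)) = X3 + X4).
  { unfold sin_moment, X3, X4. rewrite <- RInt_plus_R by solve_ex_RInt.
    apply RInt_ext; intros; unfold u, v. rewrite sin_plus. simpl; ring. }
  set (J := bessel_J0 b) in *. unfold osc_norm at 1. rewrite Ec, Es.
  replace (X1 - X2) with (J * cos_moment a psi + (X1 - J * cos_moment a psi + - X2)) by ring.
  replace (X3 + X4) with (J * sin_moment a psi + (X3 + (X4 - J * sin_moment a psi))) by ring.
  eapply Rle_trans; [apply sqrt_sum_sq_add_le |].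
  replace ((J * cos_moment a psi) ^ 2 + (J * sin_moment a psi) ^ 2)
    with (Rabs J ^ 2 * (cos_moment a psi ^ 2 + sin_moment a psi ^ 2)) by (rewrite Rabs_sq; ring).
  rewrite sqrt_mult, sqrt_pow2 by (try apply Rabs_pos; try apply pow2_ge_0; nra).
  fold (osc_norm a psi).
  pose proof (Rabs_triang (X1 - J * cos_moment a psi) (- X2)) as T1.
  pose proof (Rabs_triang X3 (X4 - J * sin_moment a psi)) as T2.
  rewrite Rabs_Ropp in T1.
  replace (32 * PI ^ 2 * K / INR n) with (4 * e) by (unfold e; field; apply not_0_INR; lia).
  lra.
Qed.

(** * Shear pulses and the mixing estimate *)

(* Frequencies grow fast enough that each new pulse oscillates on a scale where all the
   previous ones are nearly constant. *)
Fixpoint freq (j : nat) : nat :=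
  match j with O => 1 | S i => 2 * 16 ^ S i * freq i end.

Fixpoint freq_sum (j : nat) : nat :=
  match j with O => 0 | S i => freq_sum i + freq i end.

Definition pulse (j : nat) (y : R) : R := (1 - cos (INR (freq j) * y)) / 2.

Fixpoint epoch_phase (j : nat) (y : R) : R :=
  match j with O => 0 | S i => epoch_phase i y + PI * pulse i y end.

Definition flow_phase (n : nat) (tau y : R) : R := epoch_phase n y + tau * pulse n y.

Lemma freq_ge_1 j : (freq j >= 1)%nat.
Proof.
  induction j as [|j IH]; simpl; [lia |].
  assert (16 ^ j <> 0)%nat by (apply Nat.pow_nonzero; lia). nia.
Qed.

Lemma INR_freq_S j : INR (freq (S j)) = 2 * 16 ^ S j * INR (freq j).
Proof.
  change (freq (S j)) with (2 * 16 ^ S j * freq j)%nat.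
  rewrite !mult_INR, pow_INR.
  replace (INR 2) with 2 by (simpl; ring). replace (INR 16) with 16 by (simpl; ring).
  reflexivity.
Qed.

Lemma freq_dominates_sum j : 16 ^ j * (1 + INR (freq_sum j)) <= INR (freq j).
Proof.
  induction j as [|j IH].
  - simpl. lra.
  - rewrite INR_freq_S. change (freq_sum (S j)) with (freq_sum j + freq j)%nat. rewrite plus_INR.
    pose proof (pos_INR (freq_sum j)).
    assert (H16 : 1 <= 16 ^ j) by (apply pow_R1_Rle; lra).
    assert (1 + INR (freq_sum j) <= INR (freq j)) by nra.
    simpl pow. nra.
Qed.

Definition pulse_deriv (j : nat) (y : R) : R := INR (freq j) * sin (INR (freq j) * y) / 2.

Fixpoint epoch_phase_deriv (j : nat) (y : R) : R :=
  match j with O => 0 | S i => epoch_phase_deriv i y + PI * pulse_deriv i y end.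

Lemma is_derive_pulse j y : is_derive (pulse j) y (pulse_deriv j y).
Proof. unfold pulse, pulse_deriv. auto_derive; auto. field. Qed.

Lemma is_derive_epoch_phase j y : is_derive (epoch_phase j) y (epoch_phase_deriv j y).
Proof.
  induction j as [|j IH]; simpl.
  - apply (is_derive_const (K := R_AbsRing) (V := R_NormedModule)).
  - apply (is_derive_plus (epoch_phase j) (fun y => PI * pulse j y)); auto.
    apply (is_derive_scal (pulse j)), is_derive_pulse.
Qed.

Lemma continuous_pulse j : continuous_R (pulse j).
Proof. unfold pulse. solve_continuous. Qed.

Lemma continuous_epoch_phase j : continuous_R (epoch_phase j).
Proof. apply continuous_R_of_derive; intros; eexists; apply is_derive_epoch_phase. Qed.

Lemma continuous_epoch_phase_deriv j : continuous_R (epoch_phase_deriv j).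
Proof.
  induction j as [|j IH]; simpl; unfold pulse_deriv; solve_continuous.
Qed.

Lemma pulse_bounds j y : 0 <= pulse j y <= 1.
Proof. unfold pulse. pose proof (COS_bound (INR (freq j) * y)). lra. Qed.

Lemma Rabs_pulse_deriv_le j y : Rabs (pulse_deriv j y) <= INR (freq j) / 2.
Proof.
  unfold pulse_deriv, Rdiv. pose proof (pos_INR (freq j)).
  rewrite !Rabs_mult, Rabs_inv, (Rabs_right 2), (Rabs_right (INR (freq j))) by lra.
  assert (Rabs (sin (INR (freq j) * y)) <= 1) by apply Rabs_le, SIN_bound.
  apply Rmult_le_compat_r; [lra |].
  assert (INR (freq j) * Rabs (sin (INR (freq j) * y)) <= INR (freq j) * 1)
    by (apply Rmult_le_compat_l; lra).
  lra.
Qed.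

Lemma Rabs_epoch_phase_deriv_le j y : Rabs (epoch_phase_deriv j y) <= PI / 2 * INR (freq_sum j).
Proof.
  pose proof PI_RGT_0.
  induction j as [|j IH]; simpl.
  - rewrite Rabs_R0; lra.
  - rewrite plus_INR. eapply Rle_trans; [apply Rabs_triang |].
    rewrite Rabs_mult, (Rabs_right PI) by lra.
    pose proof (Rabs_pulse_deriv_le j y). nra.
Qed.

Lemma lipschitz_T_epoch_phase j : lipschitz_T (epoch_phase j) (PI / 2 * INR (freq_sum j)).
Proof.
  apply (lipschitz_T_of_is_derive _ (epoch_phase_deriv j)); [apply is_derive_epoch_phase |].
  intros y _; apply Rabs_epoch_phase_deriv_le.
Qed.

Lemma lipschitz_T_linear_add f l K : lipschitz_T f K -> lipschitz_T (fun y => l * y + f y) (Rabs l + K).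
Proof.
  intros Hf y z Hy Hz.
  replace (l * y + f y - (l * z + f z)) with (l * (y - z) + (f y - f z)) by ring.
  eapply Rle_trans; [apply Rabs_triang |]. rewrite Rabs_mult.
  pose proof (Hf y z Hy Hz). lra.
Qed.

Section Mixing.

Variables (a : R -> R) (Ka Ma l : R).
Hypotheses (Ha : continuous_R a) (HKa : 0 <= Ka) (HMa : 0 <= Ma)
  (La : lipschitz_T a Ka) (Ba : bounded_T a Ma).

Let D := Ka + Ma * Rabs l + 2 * Ma.

Let psi j y := l * y + epoch_phase j y.

Let continuous_psi j : continuous_R (psi j).
Proof. unfold psi. pose proof (continuous_epoch_phase j). solve_continuous. Qed.

Lemma epoch_error_le j :
  (Ka + Ma * (Rabs l + PI / 2 * INR (freq_sum j))) / INR (freq j) <= D / 16 ^ j.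
Proof.
  pose proof (freq_dominates_sum j). pose proof (pos_INR (freq_sum j)). pose proof PI_4.
  pose proof (Rabs_pos l). assert (0 < 16 ^ j) by (apply pow_lt; lra).
  set (S := INR (freq_sum j)) in *. set (N := INR (freq j)) in *.
  assert (HN : 0 < N) by nra.
  assert (0 <= Ma * S * (2 - PI / 2)) by (apply Rmult_le_pos; [apply Rmult_le_pos |]; lra).
  assert (0 <= S * Ka) by (apply Rmult_le_pos; lra).
  assert (0 <= S * (Ma * Rabs l)) by (apply Rmult_le_pos; [| apply Rmult_le_pos]; lra).
  assert (Ka + Ma * (Rabs l + PI / 2 * S) <= D * (1 + S)) by (unfold D; nra).
  assert (0 <= D) by (unfold D; nra).
  apply Rle_trans with (D * (1 + S) / N).
  - unfold Rdiv. apply Rmult_le_compat_r; [left; apply Rinv_0_lt_compat |]; lra.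
  - replace (D * (1 + S) / N) with (D / 16 ^ j * (16 ^ j * (1 + S) / N)) by (field; lra).
    rewrite <- (Rmult_1_r (D / 16 ^ j)) at 2.
    apply Rmult_le_compat_l; [unfold Rdiv; apply Rmult_le_pos; [| left; apply Rinv_0_lt_compat]; lra |].
    unfold Rdiv. apply (Rmult_le_reg_r N); [lra |].
    rewrite Rmult_assoc, Rinv_l, Rmult_1_l, Rmult_1_r by lra. lra.
Qed.

(* The pulse adds [tau/2 - (tau/2) cos (freq j y)]: a rotation and a cosine phase. *)
Lemma osc_norm_pulse_step j tau : 0 <= tau ->
  osc_norm a (fun y => psi j y + tau * pulse j y) <=
    Rabs (bessel_J0 (- (tau / 2))) * osc_norm a (psi j) + 32 * PI ^ 2 * D / 16 ^ j.
Proof.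
  intros Htau. pose proof PI_RGT_0.
  rewrite (osc_norm_ext a _ (fun y => (psi j y + - (tau / 2) * cos (INR (freq j) * y)) + tau / 2))
    by (intros; unfold pulse; field).
  rewrite osc_norm_add_const by (auto; pose proof (continuous_psi j); solve_continuous).
  eapply Rle_trans.
  - apply (osc_norm_add_cos_phase a (psi j) Ka Ma (Rabs l + PI / 2 * INR (freq_sum j)));
      auto using freq_ge_1.
    + pose proof (Rabs_pos l). pose proof (pos_INR (freq_sum j)). nra.
    + apply lipschitz_T_linear_add, lipschitz_T_epoch_phase.
  - apply Rplus_le_compat_l. unfold Rdiv.
    rewrite !(Rmult_assoc (32 * PI ^ 2)). apply Rmult_le_compat_l; [nra | apply epoch_error_le].
Qed.

Lemma osc_norm_epoch_phase j :
  osc_norm a (psi j) <= (7 / 8) ^ j * (4 * PI * Ma + 256 * PI ^ 2 * D).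
Proof.
  pose proof PI_RGT_0. pose proof (Rabs_pos l).
  assert (HD : 0 <= D) by (unfold D; nra).
  induction j as [|j IH].
  - rewrite pow_O, Rmult_1_l.
    pose proof (osc_norm_le a (psi 0) Ma Ha (continuous_psi 0) Ba).
    assert (0 <= 256 * PI ^ 2 * D) by (apply Rmult_le_pos; nra). lra.
  - rewrite (osc_norm_ext a (psi (S j)) (fun y => psi j y + PI * pulse j y))
      by (intros; unfold psi; simpl; ring).
    eapply Rle_trans; [apply osc_norm_pulse_step; lra |].
    pose proof Rabs_bessel_J0_half_pi as HJ.
    pose proof (osc_norm_ge_0 a (psi j)).
    assert (H16 : 1 <= (7 / 8) ^ j * 16 ^ j) by (rewrite <- Rpow_mult_distr; apply pow_R1_Rle; lra).
    assert (0 < 16 ^ j) by (apply pow_lt; lra).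
    assert (Herr : 32 * PI ^ 2 * D / 16 ^ j <= 32 * PI ^ 2 * D * (7 / 8) ^ j).
    { unfold Rdiv. apply Rmult_le_compat_l; [nra |].
      apply (Rmult_le_reg_r (16 ^ j)); auto. rewrite Rinv_l by lra. lra. }
    assert (Rabs (bessel_J0 (- (PI / 2))) * osc_norm a (psi j)
              <= 3 / 4 * ((7 / 8) ^ j * (4 * PI * Ma + 256 * PI ^ 2 * D)))
      by (apply Rmult_le_compat; auto using Rabs_pos).
    assert (0 <= (7 / 8) ^ j * (4 * PI * Ma)) by (apply Rmult_le_pos; [apply pow_le |]; nra).
    simpl pow. nra.
Qed.

Lemma osc_norm_flow_phase n tau : 0 <= tau <= PI ->
  osc_norm a (fun y => flow_phase n tau y + l * y) <=
    (7 / 8) ^ n * (4 * PI * Ma + 288 * PI ^ 2 * D).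
Proof.
  intros Htau. pose proof PI_RGT_0. pose proof (Rabs_pos l).
  assert (HD : 0 <= D) by (unfold D; nra).
  rewrite (osc_norm_ext a _ (fun y => psi n y + tau * pulse n y))
    by (intros; unfold psi, flow_phase; ring).
  eapply Rle_trans; [apply osc_norm_pulse_step; lra |].
  pose proof (Rabs_bessel_J0_le_1 (- (tau / 2))).
  pose proof (osc_norm_epoch_phase n). pose proof (osc_norm_ge_0 a (psi n)).
  assert (H16 : 1 <= (7 / 8) ^ n * 16 ^ n) by (rewrite <- Rpow_mult_distr; apply pow_R1_Rle; lra).
  assert (0 < 16 ^ n) by (apply pow_lt; lra).
  assert (Herr : 32 * PI ^ 2 * D / 16 ^ n <= 32 * PI ^ 2 * D * (7 / 8) ^ n).
  { unfold Rdiv. apply Rmult_le_compat_l; [nra |].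
    apply (Rmult_le_reg_r (16 ^ n)); auto. rewrite Rinv_l by lra. lra. }
  assert (Rabs (bessel_J0 (- (tau / 2))) * osc_norm a (psi n) <= osc_norm a (psi n))
    by (rewrite <- (Rmult_1_l (osc_norm a (psi n))) at 2; apply Rmult_le_compat_r; auto).
  nra.
Qed.

End Mixing.

Definition flow_phase_deriv (n : nat) (tau y : R) : R := epoch_phase_deriv n y + tau * pulse_deriv n y.

Lemma is_derive_flow_phase n tau y : is_derive (flow_phase n tau) y (flow_phase_deriv n tau y).
Proof.
  apply (is_derive_plus (epoch_phase n) (fun y => tau * pulse n y)); [apply is_derive_epoch_phase |].
  apply (is_derive_scal (pulse n)), is_derive_pulse.
Qed.

Lemma continuous_flow_phase_deriv n tau : continuous_R (flow_phase_deriv n tau).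
Proof.
  pose proof (continuous_epoch_phase_deriv n).
  unfold flow_phase_deriv, pulse_deriv. solve_continuous.
Qed.

Lemma Rabs_flow_phase_deriv_le n tau y : 0 <= tau <= PI ->
  Rabs (flow_phase_deriv n tau y) <= PI * INR (freq n).
Proof.
  intros Htau. pose proof PI_RGT_0. unfold flow_phase_deriv.
  eapply Rle_trans; [apply Rabs_triang |]. rewrite Rabs_mult, (Rabs_right tau) by lra.
  pose proof (Rabs_epoch_phase_deriv_le n y). pose proof (Rabs_pulse_deriv_le n y).
  pose proof (freq_dominates_sum n). pose proof (pos_INR (freq_sum n)).
  assert (1 <= 16 ^ n) by (apply pow_R1_Rle; lra).
  assert (INR (freq_sum n) <= INR (freq n)) by nra.
  assert (tau * Rabs (pulse_deriv n y) <= PI * (INR (freq n) / 2))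
    by (apply Rmult_le_compat; auto using Rabs_pos; lra).
  nra.
Qed.

(** * The velocity field *)

(* [epoch t] is the [j] with [t] in [[j PI, (j+1) PI)], and [0] for [t < 0]. *)
Definition epoch (t : R) : nat := Z.to_nat (Int_part (t / PI)).

Definition velocity (t y : R) : R := pulse (epoch t) y.

Lemma Int_part_unique z x : IZR z <= x < IZR z + 1 -> Int_part x = z.
Proof.
  intros [H1 H2]. destruct (base_Int_part x) as [H3 H4].
  assert (z < Int_part x + 1)%Z by (apply lt_IZR; rewrite plus_IZR; simpl; lra).
  assert (Int_part x < z + 1)%Z by (apply lt_IZR; rewrite plus_IZR; simpl; lra).
  lia.
Qed.

Lemma epoch_eq (m : nat) s : INR m * PI <= s < (INR m + 1) * PI -> epoch s = m.
Proof.
  intros [H1 H2]. pose proof PI_RGT_0. unfold epoch.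
  rewrite (Int_part_unique (Z.of_nat m)); [apply Nat2Z.id |].
  rewrite <- INR_IZR_INZ. split.
  - apply (Rmult_le_reg_r PI); auto. unfold Rdiv; rewrite Rmult_assoc, Rinv_l; lra.
  - apply (Rmult_lt_reg_r PI); auto. unfold Rdiv; rewrite Rmult_assoc, Rinv_l; lra.
Qed.

Lemma epoch_neg s : s < 0 -> epoch s = 0%nat.
Proof.
  intros Hs. pose proof PI_RGT_0. unfold epoch.
  destruct (base_Int_part (s / PI)) as [H1 _].
  assert (s / PI < 0) by (apply Rdiv_neg_pos; auto).
  assert (Int_part (s / PI) < 0)%Z by (apply lt_IZR; simpl; lra).
  destruct (Int_part (s / PI)); simpl; lia.
Qed.

Lemma epoch_spec t : 0 <= t -> INR (epoch t) * PI <= t < (INR (epoch t) + 1) * PI.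
Proof.
  intros Ht. pose proof PI_RGT_0. unfold epoch.
  destruct (base_Int_part (t / PI)) as [H1 H2].
  assert (0 <= t / PI) by (apply Rdiv_le_0_compat; auto).
  assert (-1 < Int_part (t / PI))%Z by (apply lt_IZR; simpl; lra).
  rewrite INR_IZR_INZ, Z2Nat.id by lia.
  split.
  - apply (Rmult_le_reg_r (/ PI)); [apply Rinv_0_lt_compat; auto |].
    rewrite Rmult_assoc, Rinv_r, Rmult_1_r by lra. auto.
  - apply (Rmult_lt_reg_r (/ PI)); [apply Rinv_0_lt_compat; auto |].
    rewrite Rmult_assoc, Rinv_r, Rmult_1_r by lra. lra.
Qed.

Lemma is_RInt_velocity_const_epoch y (m : nat) a b : a <= b ->
  (forall s, a < s < b -> epoch s = m) ->
  is_RInt (fun s => velocity s y) a b ((b - a) * pulse m y).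
Proof.
  intros Hab Hm.
  apply (is_RInt_ext (V := R_NormedModule) (fun _ => pulse m y));
    [| apply (is_RInt_const (V := R_NormedModule))].
  intros s Hs. rewrite Rmin_left, Rmax_right in Hs by lra.
  unfold velocity. rewrite Hm; auto.
Qed.

Lemma is_RInt_velocity_epochs y (m : nat) :
  is_RInt (fun s => velocity s y) 0 (INR m * PI) (epoch_phase m y).
Proof.
  pose proof PI_RGT_0.
  induction m as [|m IH].
  - simpl. rewrite Rmult_0_l. apply (is_RInt_point (V := R_NormedModule)).
  - replace (epoch_phase (S m) y)
      with (plus (epoch_phase m y) ((INR (S m) * PI - INR m * PI) * pulse m y))
      by (rewrite S_INR; simpl; unfold plus; simpl; ring).
    apply (is_RInt_Chasles (V := R_NormedModule)) with (INR m * PI); auto.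
    pose proof (pos_INR m). rewrite S_INR.
    apply is_RInt_velocity_const_epoch; [nra |].
    intros s Hs; apply epoch_eq; lra.
Qed.

Lemma is_RInt_velocity y t : 0 <= t ->
  is_RInt (fun s => velocity s y) 0 t (flow_phase (epoch t) (t - INR (epoch t) * PI) y).
Proof.
  intros Ht. pose proof (epoch_spec t Ht) as Hs. set (m := epoch t) in *.
  replace (flow_phase m (t - INR m * PI) y)
    with (plus (epoch_phase m y) ((t - INR m * PI) * pulse m y))
    by (unfold flow_phase, plus; simpl; ring).
  apply (is_RInt_Chasles (V := R_NormedModule)) with (INR m * PI).
  - apply is_RInt_velocity_epochs.
  - apply is_RInt_velocity_const_epoch; [lra |].
    intros s Hs'; apply epoch_eq; lra.
Qed.

Definition displacement (t : R) : R -> R := flow_phase (epoch t) (t - INR (epoch t) * PI).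

Lemma RInt_velocity y t : 0 <= t -> RInt (fun s => velocity s y) 0 t = displacement t y.
Proof. intros Ht; apply is_RInt_unique, is_RInt_velocity, Ht. Qed.

Lemma transport_solution_velocity rho0 rho t : transport_solution velocity rho0 rho -> 0 <= t ->
  rho t = fun x y => rho0 (x - displacement t y) y.
Proof.
  intros Hrho Ht. apply functional_extensionality; intros x.
  apply functional_extensionality; intros y.
  rewrite <- (Hrho t (x - displacement t y) y Ht), RInt_velocity by auto.
  f_equal; ring.
Qed.

Lemma ex_RInt_velocity y a b : ex_RInt (fun s => velocity s y) a b.
Proof.
  assert (H0 : forall c, ex_RInt (fun s => velocity s y) 0 c).
  { intros c. destruct (Rle_dec 0 c) as [Hc | Hc].
    - eexists; apply is_RInt_velocity, Hc.
    - apply (ex_RInt_swap (V := R_NormedModule)). eexists.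
      apply (is_RInt_velocity_const_epoch y 0); [lra |].
      intros s Hs; apply epoch_neg; lra. }
  apply (ex_RInt_Chasles (V := R_NormedModule)) with 0; auto.
  apply (ex_RInt_swap (V := R_NormedModule)); auto.
Qed.

Lemma smooth1_trig f N c1 c2 c3 :
  (forall y, f y = c1 + c2 * cos (N * y) + c3 * sin (N * y)) -> smooth1 f.
Proof.
  intros Hf.
  assert (Hrep : forall k, exists d1 d2 d3,
            forall y, Derive_n f k y = d1 + d2 * cos (N * y) + d3 * sin (N * y)).
  { induction k as [|k [d1 [d2 [d3 Hk]]]].
    - exists c1, c2, c3; exact Hf.
    - exists 0, (d3 * N), (- (d2 * N)). intros y.
      change (Derive (Derive_n f k) y = 0 + d3 * N * cos (N * y) + - (d2 * N) * sin (N * y)).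
      rewrite (Derive_ext _ _ y Hk). apply is_derive_unique. auto_derive; auto. ring. }
  intros k x. destruct (Hrep k) as [d1 [d2 [d3 Hk]]].
  apply (ex_derive_ext (fun y => d1 + d2 * cos (N * y) + d3 * sin (N * y))).
  - intros; symmetry; apply Hk.
  - auto_derive; auto.
Qed.

Lemma smooth1_velocity t : smooth1 (velocity t).
Proof.
  apply (smooth1_trig _ (INR (freq (epoch t))) (1 / 2) (- (1 / 2)) 0).
  intros y; unfold velocity, pulse; field.
Qed.

Lemma periodic2pi_velocity t : periodic2pi (velocity t).
Proof.
  intros y. unfold velocity, pulse.
  replace (INR (freq (epoch t)) * (y + 2 * PI))
    with (INR (freq (epoch t)) * y + 2 * INR (freq (epoch t)) * PI) by ring.
  rewrite cos_period. reflexivity.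
Qed.

Lemma Rabs_velocity_le_1 t y : Rabs (velocity t y) <= 1.
Proof. unfold velocity. pose proof (pulse_bounds (epoch t) y). apply Rabs_le; lra. Qed.

Lemma H1_norm_T_pulse j : H1_norm_T (pulse j) <= 6 * INR (freq j).
Proof.
  unfold H1_norm_T. set (N := INR (freq j)).
  assert (HN : 1 <= N) by (apply (le_INR 1), freq_ge_1).
  pose proof PI_RGT_0. pose proof PI_4.
  rewrite (RInt_ext _ (fun y => pulse j y ^ 2 + (N * sin (N * y) / 2) ^ 2))
    by (intros; rewrite (is_derive_unique _ _ _ (is_derive_pulse j _)); auto).
  assert (Hle : RInt (fun y => pulse j y ^ 2 + (N * sin (N * y) / 2) ^ 2) (- PI) PI
                <= RInt (fun _ => (1 + N) ^ 2) (- PI) PI).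
  { pose proof (continuous_pulse j).
    apply RInt_le; [lra | solve_ex_RInt | solve_ex_RInt |].
    intros y _. pose proof (pulse_bounds j y). pose proof (SIN_bound (N * y)).
    assert (sin (N * y) ^ 2 <= 1) by nra.
    assert ((N * sin (N * y) / 2) ^ 2 = N ^ 2 * sin (N * y) ^ 2 / 4) by field.
    assert ((N * sin (N * y) / 2) ^ 2 <= N ^ 2) by nra. nra. }
  rewrite RInt_const_R in Hle.
  apply Rle_trans with (sqrt ((3 * (1 + N)) ^ 2)).
  - apply sqrt_le_1_alt. nra.
  - rewrite sqrt_pow2 by lra. lra.
Qed.

Lemma freq_le_pow j : INR (freq j) <= 64 ^ (j * j).
Proof.
  induction j as [|j IH]; [simpl; lra |].
  rewrite INR_freq_S. replace (S j * S j)%nat with (j * j + (2 * j + 1))%nat by lia.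
  rewrite pow_add.
  assert (H16 : 2 * 16 ^ S j <= 64 ^ (2 * j + 1)).
  { clear IH. induction j as [|j IHj]; [simpl; lra |].
    replace (2 * S j + 1)%nat with (S (S (2 * j + 1))) by lia.
    change (16 ^ S (S j)) with (16 * 16 ^ S j).
    change (64 ^ S (S (2 * j + 1))) with (64 * (64 * 64 ^ (2 * j + 1))).
    assert (0 <= 16 ^ S j) by (apply pow_le; lra). lra. }
  pose proof (pos_INR (freq j)).
  assert (0 <= 64 ^ (j * j)) by (apply pow_le; lra).
  assert (0 <= 2 * 16 ^ S j) by (apply Rmult_le_pos; [lra | apply pow_le; lra]).
  rewrite (Rmult_comm (64 ^ (j * j))).
  apply Rmult_le_compat; lra.
Qed.

Lemma IZR_ceil_ge t : t <= IZR (ceil t).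
Proof. unfold ceil. rewrite opp_IZR. destruct (base_Int_part (- t)). lra. Qed.

Lemma freq_epoch_le t : 0 <= t -> INR (freq (epoch t)) <= exp (ln 64 * IZR (ceil t) ^ 2).
Proof.
  intros Ht. eapply Rle_trans; [apply freq_le_pow |].
  pose proof (epoch_spec t Ht). pose proof (IZR_ceil_ge t). pose proof PI_gt_3.
  pose proof (pos_INR (epoch t)).
  assert (Hj : INR (epoch t) <= IZR (ceil t)) by nra.
  rewrite <- Rpower_pow by lra. unfold Rpower.
  assert (0 < ln 64) by (rewrite <- ln_1; apply ln_increasing; lra).
  apply exp_le_compat. rewrite mult_INR, Rmult_comm. apply Rmult_le_compat_l; [lra |]. simpl. nra.
Qed.

Lemma H1_norm_T_velocity t : 0 <= t ->
  H1_norm_T (velocity t) <= 6 * exp (ln 64 * IZR (ceil t) ^ 2).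
Proof.
  intros Ht. change (velocity t) with (pulse (epoch t)).
  pose proof (H1_norm_T_pulse (epoch t)). pose proof (freq_epoch_le t Ht). lra.
Qed.

(** * Fourier coefficients of the sheared profile *)

Lemma RInt_sin_mul m : RInt (fun x => sin (m * x)) (- PI) PI = 0.
Proof.
  destruct (Req_dec m 0) as [-> | Hm].
  - rewrite (RInt_ext _ (fun _ => 0)) by (intros; rewrite Rmult_0_l, sin_0; auto).
    rewrite RInt_const_R. simpl; ring.
  - apply is_RInt_unique.
    replace 0 with (minus ((fun x => - cos (m * x) / m) PI) ((fun x => - cos (m * x) / m) (- PI))).
    + apply (is_RInt_derive (V := R_CompleteNormedModule) (fun x => - cos (m * x) / m)).
      * intros; auto_derive; auto. field; auto.
      * intros. apply continuous_R_sin. solve_continuous.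
    + unfold minus, plus, opp; simpl. replace (m * - PI) with (- (m * PI)) by ring.
      rewrite cos_neg. field; auto.
Qed.

Lemma RInt_cos_IZR_mul (m : Z) :
  RInt (fun x => cos (IZR m * x)) (- PI) PI = if Z.eqb m 0 then 2 * PI else 0.
Proof.
  destruct (Z.eqb_spec m 0) as [-> | Hm].
  - rewrite (RInt_ext _ (fun _ => 1)) by (intros; rewrite Rmult_0_l, cos_0; auto).
    rewrite RInt_const_R. simpl; ring.
  - assert (HmR : IZR m <> 0) by (apply not_0_IZR; auto).
    apply is_RInt_unique.
    replace 0 with (minus ((fun x => sin (IZR m * x) / IZR m) PI)
                          ((fun x => sin (IZR m * x) / IZR m) (- PI))).
    + apply (is_RInt_derive (V := R_CompleteNormedModule) (fun x => sin (IZR m * x) / IZR m)).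
      * intros; auto_derive; auto. field; auto.
      * intros. apply continuous_R_cos. solve_continuous.
    + unfold minus, plus, opp; simpl. replace (IZR m * - PI) with (- (IZR m * PI)) by ring.
      rewrite sin_neg, (sin_eq_0_1 (IZR m * PI)) by (exists m; auto). field; auto.
Qed.

Lemma Rabs_RInt_cos_IZR_mul_le (m : Z) : Rabs (RInt (fun x => cos (IZR m * x)) (- PI) PI) <= 2 * PI.
Proof.
  rewrite RInt_cos_IZR_mul. pose proof PI_RGT_0.
  destruct (Z.eqb m 0); rewrite Rabs_right; lra.
Qed.

Lemma RInt_RInt_separable (c1 c2 c3 c4 d1 d2 d3 d4 : R -> R) :
  continuous_R c1 -> continuous_R c2 -> continuous_R c3 -> continuous_R c4 ->
  continuous_R d1 -> continuous_R d2 -> continuous_R d3 -> continuous_R d4 ->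
  RInt (fun x => RInt (fun y => c1 x * d1 y + c2 x * d2 y + c3 x * d3 y + c4 x * d4 y) (- PI) PI)
    (- PI) PI =
  RInt c1 (- PI) PI * RInt d1 (- PI) PI + RInt c2 (- PI) PI * RInt d2 (- PI) PI +
  RInt c3 (- PI) PI * RInt d3 (- PI) PI + RInt c4 (- PI) PI * RInt d4 (- PI) PI.
Proof.
  intros H1 H2 H3 H4 G1 G2 G3 G4.
  set (I := fun d : R -> R => RInt d (- PI) PI).
  rewrite (RInt_ext _ (fun x => I d1 * c1 x + I d2 * c2 x + I d3 * c3 x + I d4 * c4 x)).
  - rewrite !RInt_plus_R, !RInt_scal_R by solve_ex_RInt. unfold I. simpl. ring.
  - intros x _. rewrite !RInt_plus_R, !RInt_scal_R by solve_ex_RInt. unfold I. simpl. ring.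
Qed.

Definition sheared (f0 g0 P : R -> R) (x y : R) : R :=
  f0 y * sin (x - P y) + g0 y * cos (x - P y).

Lemma Rabs_scaled_sum_le c1 c2 X Y A B :
  Rabs c1 <= 2 * PI -> Rabs c2 <= 2 * PI -> Rabs X <= A / 2 -> Rabs Y <= B / 2 ->
  Rabs (/ (2 * PI) ^ 2 * (c1 * X + c2 * Y)) <= (A + B) / 2.
Proof.
  intros H1 H2 HX HY. pose proof PI_RGT_0. pose proof PI_gt_3.
  rewrite Rabs_mult, Rabs_inv, (Rabs_right ((2 * PI) ^ 2)) by nra.
  assert (Rabs (c1 * X + c2 * Y) <= 2 * PI * ((A + B) / 2)).
  { eapply Rle_trans; [apply Rabs_triang |]. rewrite !Rabs_mult.
    assert (Rabs c1 * Rabs X <= 2 * PI * (A / 2)) by (apply Rmult_le_compat; auto using Rabs_pos).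
    assert (Rabs c2 * Rabs Y <= 2 * PI * (B / 2)) by (apply Rmult_le_compat; auto using Rabs_pos).
    lra. }
  pose proof (Rabs_pos X); pose proof (Rabs_pos Y).
  apply Rle_trans with (/ (2 * PI) ^ 2 * (2 * PI * ((A + B) / 2))).
  - apply Rmult_le_compat_l; [apply Rlt_le, Rinv_0_lt_compat; nra | auto].
  - replace (/ (2 * PI) ^ 2 * (2 * PI * ((A + B) / 2))) with ((A + B) / 2 * / (2 * PI))
      by (field; lra).
    rewrite <- (Rmult_1_r ((A + B) / 2)) at 2.
    apply Rmult_le_compat_l; [lra |]. rewrite <- Rinv_1. apply Rinv_le_contravar; lra.
Qed.

Lemma RInt_half_add u v : continuous_R u -> continuous_R v ->
  RInt (fun y => (u y + v y) / 2) (- PI) PI = / 2 * (RInt u (- PI) PI + RInt v (- PI) PI).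
Proof.
  intros Hu Hv. rewrite (RInt_ext _ (fun y => / 2 * (u y + v y))) by (intros; simpl; field).
  rewrite RInt_scal_R, RInt_plus_R by solve_ex_RInt. reflexivity.
Qed.

Lemma RInt_half_sub u v : continuous_R u -> continuous_R v ->
  RInt (fun y => (u y - v y) / 2) (- PI) PI = / 2 * (RInt u (- PI) PI - RInt v (- PI) PI).
Proof.
  intros Hu Hv. rewrite (RInt_ext _ (fun y => / 2 * (u y - v y))) by (intros; simpl; field).
  rewrite RInt_scal_R, RInt_minus_R by solve_ex_RInt. reflexivity.
Qed.

Lemma Rabs_half_add_sub_le X Y A B : Rabs X <= A -> Rabs Y <= B ->
  Rabs (/ 2 * (X + Y)) <= (A + B) / 2 /\ Rabs (/ 2 * (X - Y)) <= (A + B) / 2.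
Proof.
  intros H1 H2. rewrite !Rabs_mult, Rabs_inv, (Rabs_right 2) by lra.
  pose proof (Rabs_triang X Y). pose proof (Rabs_triang X (- Y)). rewrite Rabs_Ropp in *.
  split; unfold Rminus; lra.
Qed.

Section ShearedFourier.

Variables (f0 g0 P : R -> R) (k l : Z).
Hypotheses (Hf : continuous_R f0) (Hg : continuous_R g0) (HP : continuous_R P).

Let rho := sheared f0 g0 P.

(* Product-to-sum in both variables: the [y]-amplitudes of the modes [1 + k] and [1 - k] in [x]. *)
Let a1 y := (f0 y * sin (IZR l * y - P y) + g0 y * cos (IZR l * y - P y)) / 2.
Let a2 y := (f0 y * cos (IZR l * y - P y) - g0 y * sin (IZR l * y - P y)) / 2.
Let a3 y := (f0 y * sin (- IZR l * y - P y) + g0 y * cos (- IZR l * y - P y)) / 2.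
Let a4 y := (f0 y * cos (- IZR l * y - P y) - g0 y * sin (- IZR l * y - P y)) / 2.

Let C (m : Z) := RInt (fun x => cos (IZR m * x)) (- PI) PI.

Let continuous_amplitudes :
  continuous_R a1 /\ continuous_R a2 /\ continuous_R a3 /\ continuous_R a4.
Proof. unfold a1, a2, a3, a4. repeat split; solve_continuous. Qed.

Lemma fourier_re_sheared :
  fourier_re rho k l = / (2 * PI) ^ 2 * (C (1 + k) * RInt a1 (- PI) PI + C (1 - k) * RInt a3 (- PI) PI).
Proof.
  destruct continuous_amplitudes as [H1 [H2 [H3 H4]]].
  unfold fourier_re.
  rewrite (RInt_ext _ (fun x => RInt (fun y =>
      cos (IZR (1 + k) * x) * a1 y + sin (IZR (1 + k) * x) * a2 y +
      cos (IZR (1 - k) * x) * a3 y + sin (IZR (1 - k) * x) * a4 y) (- PI) PI)).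
  - rewrite RInt_RInt_separable by solve_continuous.
    rewrite !RInt_sin_mul. unfold C. ring.
  - intros x _. apply RInt_ext. intros y _.
    unfold rho, sheared, a1, a2, a3, a4. rewrite plus_IZR, minus_IZR.
    replace ((1 + IZR k) * x) with (x + IZR k * x) by ring.
    replace ((1 - IZR k) * x) with (x - IZR k * x) by ring.
    replace (- IZR l * y) with (- (IZR l * y)) by ring.
    repeat rewrite ?sin_plus, ?cos_plus, ?sin_minus, ?cos_minus, ?sin_neg, ?cos_neg.
    simpl; field.
Qed.

Lemma fourier_im_sheared :
  fourier_im rho k l = / (2 * PI) ^ 2 * (C (1 + k) * - RInt a2 (- PI) PI + C (1 - k) * RInt a4 (- PI) PI).
Proof.
  destruct continuous_amplitudes as [H1 [H2 [H3 H4]]].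
  unfold fourier_im.
  rewrite (RInt_ext _ (fun x => RInt (fun y =>
      cos (IZR (1 + k) * x) * - a2 y + sin (IZR (1 + k) * x) * a1 y +
      cos (IZR (1 - k) * x) * a4 y + sin (IZR (1 - k) * x) * - a3 y) (- PI) PI)).
  - rewrite RInt_RInt_separable by solve_continuous.
    rewrite !RInt_sin_mul, RInt_opp_R by solve_ex_RInt. unfold C. ring.
  - intros x _. apply RInt_ext. intros y _.
    unfold rho, sheared, a1, a2, a3, a4. rewrite plus_IZR, minus_IZR.
    replace ((1 + IZR k) * x) with (x + IZR k * x) by ring.
    replace ((1 - IZR k) * x) with (x - IZR k * x) by ring.
    replace (- IZR l * y) with (- (IZR l * y)) by ring.
    repeat rewrite ?sin_plus, ?cos_plus, ?sin_minus, ?cos_minus, ?sin_neg, ?cos_neg.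
    simpl; field.
Qed.

Lemma fourier_abs2_sheared_eq_0 : (k <> 1)%Z -> (k <> -1)%Z -> fourier_abs2 rho k l = 0.
Proof.
  intros H1 H2. unfold fourier_abs2. rewrite fourier_re_sheared, fourier_im_sheared. unfold C.
  rewrite !RInt_cos_IZR_mul.
  replace (Z.eqb (1 + k) 0) with false by (symmetry; apply Z.eqb_neq; lia).
  replace (Z.eqb (1 - k) 0) with false by (symmetry; apply Z.eqb_neq; lia).
  ring.
Qed.


Lemma RInt_mul_sin_sub c a : continuous_R a ->
  RInt (fun y => a y * sin (c * y - P y)) (- PI) PI = - sin_moment a (fun y => P y + - c * y).
Proof.
  intros Ha. unfold sin_moment. rewrite <- RInt_opp_R by solve_ex_RInt.
  apply RInt_ext. intros y _.
  replace (c * y - P y) with (- (P y + - c * y)) by ring. rewrite sin_neg. simpl; ring.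
Qed.

Lemma RInt_mul_cos_sub c a :
  RInt (fun y => a y * cos (c * y - P y)) (- PI) PI = cos_moment a (fun y => P y + - c * y).
Proof.
  unfold cos_moment. apply RInt_ext. intros y _.
  replace (c * y - P y) with (- (P y + - c * y)) by ring. rewrite cos_neg. reflexivity.
Qed.

Let osc_minus_l := osc_norm f0 (fun y => P y + - IZR l * y) + osc_norm g0 (fun y => P y + - IZR l * y).
Let osc_plus_l := osc_norm f0 (fun y => P y + - - IZR l * y) + osc_norm g0 (fun y => P y + - - IZR l * y).

Lemma Rabs_RInt_amplitudes_le :
  Rabs (RInt a1 (- PI) PI) <= osc_minus_l / 2 /\ Rabs (RInt a2 (- PI) PI) <= osc_minus_l / 2 /\
  Rabs (RInt a3 (- PI) PI) <= osc_plus_l / 2 /\ Rabs (RInt a4 (- PI) PI) <= osc_plus_l / 2.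
Proof.
  unfold a1, a2, a3, a4, osc_minus_l, osc_plus_l.
  rewrite !RInt_half_add, !RInt_half_sub by solve_continuous.
  rewrite !RInt_mul_sin_sub, !RInt_mul_cos_sub by auto.
  assert (Hs : forall a c, Rabs (- sin_moment a (fun y => P y + - c * y))
                            <= osc_norm a (fun y => P y + - c * y))
    by (intros; rewrite Rabs_Ropp; apply Rabs_sin_moment_le).
  assert (Hc : forall a c, Rabs (cos_moment a (fun y => P y + - c * y))
                           <= osc_norm a (fun y => P y + - c * y))
    by (intros; apply Rabs_cos_moment_le).
  split; [| split; [| split]].
  - apply (Rabs_half_add_sub_le _ _ _ _ (Hs _ _) (Hc _ _)).
  - apply (Rabs_half_add_sub_le _ _ _ _ (Hc _ _) (Hs _ _)).
  - apply (Rabs_half_add_sub_le _ _ _ _ (Hs _ _) (Hc _ _)).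
  - apply (Rabs_half_add_sub_le _ _ _ _ (Hc _ _) (Hs _ _)).
Qed.

Lemma fourier_abs2_sheared_le : fourier_abs2 rho k l <= (osc_minus_l + osc_plus_l) ^ 2.
Proof.
  destruct Rabs_RInt_amplitudes_le as [B1 [B2 [B3 B4]]].
  pose proof (Rabs_RInt_cos_IZR_mul_le (1 + k)) as C1.
  pose proof (Rabs_RInt_cos_IZR_mul_le (1 - k)) as C2. fold (C (1 + k)) (C (1 - k)) in C1, C2.
  assert (Hre : Rabs (fourier_re rho k l) <= (osc_minus_l + osc_plus_l) / 2)
    by (rewrite fourier_re_sheared; apply Rabs_scaled_sum_le; auto).
  assert (Him : Rabs (fourier_im rho k l) <= (osc_minus_l + osc_plus_l) / 2).
  { rewrite fourier_im_sheared; apply Rabs_scaled_sum_le; auto. rewrite Rabs_Ropp; auto. }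
  assert (0 <= osc_minus_l + osc_plus_l) by (pose proof (Rabs_pos (fourier_re rho k l)); lra).
  unfold fourier_abs2. rewrite <- (Rabs_sq (fourier_re rho k l)), <- (Rabs_sq (fourier_im rho k l)).
  pose proof (Rabs_pos (fourier_re rho k l)). pose proof (Rabs_pos (fourier_im rho k l)).
  assert (Rabs (fourier_re rho k l) ^ 2 <= ((osc_minus_l + osc_plus_l) / 2) ^ 2) by (apply pow_incr; lra).
  assert (Rabs (fourier_im rho k l) ^ 2 <= ((osc_minus_l + osc_plus_l) / 2) ^ 2) by (apply pow_incr; lra).
  nra.
Qed.

End ShearedFourier.

(** * The H^-1 norm *)

Definition atan_increment (e l : R) : R := atan (e * (l + 1 / 2)) - atan (e * (l - 1 / 2)).

Lemma atan_increment_ge e l : 0 < e <= 1 -> e / (2 * (1 + e ^ 2 * l ^ 2)) <= atan_increment e l.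
Proof.
  intros He. unfold atan_increment.
  destruct (MVT_gen atan (e * (l - 1 / 2)) (e * (l + 1 / 2)) (fun x => / (1 + x ^ 2)))
    as [c [Hc ->]].
  - intros x _. apply is_derive_Reals, derivable_pt_lim_atan.
  - intros x _. apply derivable_continuous_pt. exists (/ (1 + x ^ 2)). apply derivable_pt_lim_atan.
  - rewrite Rmin_left, Rmax_right in Hc by nra.
    replace (e * (l + 1 / 2) - e * (l - 1 / 2)) with e by field.
    assert (Hc2 : 1 + c ^ 2 <= 2 * (1 + e ^ 2 * l ^ 2)).
    { assert (c ^ 2 <= e ^ 2 * (l ^ 2 + Rabs l + 1 / 4)).
      { rewrite <- (Rabs_sq c). pose proof (Rabs_pos c). pose proof (Rabs_pos l).
        assert (Rabs c <= e * (Rabs l + 1 / 2)).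
        { apply Rabs_le. destruct (Rcase_abs l) as [Hl | Hl];
            [rewrite Rabs_left by lra | rewrite Rabs_right by lra]; split; nra. }
        rewrite <- (Rabs_sq l). nra. }
      assert (Rabs l <= l ^ 2 + 1 / 4)
        by (rewrite <- (Rabs_sq l); pose proof (pow2_ge_0 (Rabs l - 1 / 2)); nra).
      assert (e ^ 2 * Rabs l <= e ^ 2 * (l ^ 2 + 1 / 4)) by (apply Rmult_le_compat_l; nra).
      assert (e ^ 2 <= 1) by nra.
      nra. }
    unfold Rdiv. rewrite (Rmult_comm (/ (1 + c ^ 2))). apply Rmult_le_compat_l; [lra |].
    apply Rinv_le_contravar; nra.
Qed.

(* A coefficient bounded both by [A^2] and by [(e (a + g |l|))^2] is, once weighted by
   [1 / (1 + l^2)], a multiple of [e * atan_increment e l], which telescopes in [l]. *)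
Lemma weighted_coeff_le x A a g e l : 0 < e <= 1 -> 0 <= x ->
  x <= A ^ 2 -> x <= (e * (a + g * Rabs l)) ^ 2 ->
  x / (1 + l ^ 2) <= 4 * (A ^ 2 + 2 * (a ^ 2 + g ^ 2)) * e * atan_increment e l.
Proof.
  intros He Hx H1 H2.
  set (mu := A ^ 2 + 2 * (a ^ 2 + g ^ 2)).
  assert (Hmu : 0 <= mu) by (unfold mu; nra).
  assert (Hl2 : 0 <= l ^ 2) by nra.
  assert (Hel : 0 <= e ^ 2 * l ^ 2) by (apply Rmult_le_pos; nra).
  assert (Hmain : x / (1 + l ^ 2) <= mu * (2 * e ^ 2 / (1 + e ^ 2 * l ^ 2))).
  { assert (Hsq : (a + g * Rabs l) ^ 2 <= 2 * (a ^ 2 + g ^ 2) * (1 + l ^ 2)).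
    { rewrite <- (Rabs_sq l). pose proof (Rabs_pos l). nra. }
    apply (Rmult_le_reg_r (1 + l ^ 2)); [lra |].
    unfold Rdiv at 1. rewrite Rmult_assoc, Rinv_l, Rmult_1_r by lra.
    destruct (Rle_dec (e ^ 2 * l ^ 2) 1) as [Hsmall | Hlarge].
    - (* low frequencies: use the decay [e] *)
      assert (e ^ 2 <= 2 * e ^ 2 / (1 + e ^ 2 * l ^ 2)).
      { apply (Rmult_le_reg_r (1 + e ^ 2 * l ^ 2)); [lra |].
        unfold Rdiv. rewrite Rmult_assoc, Rinv_l by lra. nra. }
      apply Rle_trans with (mu * e ^ 2 * (1 + l ^ 2)).
      + rewrite Rpow_mult_distr in H2. unfold mu. nra.
      + assert (0 <= mu * (1 + l ^ 2)) by nra. nra.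
    - (* high frequencies: use the uniform bound [A^2] *)
      apply Rle_trans with mu; [unfold mu; nra |].
      assert (1 + e ^ 2 * l ^ 2 <= 2 * e ^ 2 * l ^ 2) by lra.
      assert (1 <= 2 * e ^ 2 / (1 + e ^ 2 * l ^ 2) * (1 + l ^ 2)).
      { apply (Rmult_le_reg_r (1 + e ^ 2 * l ^ 2)); [lra |].
        unfold Rdiv. replace (2 * e ^ 2 * / (1 + e ^ 2 * l ^ 2) * (1 + l ^ 2) * (1 + e ^ 2 * l ^ 2))
          with (2 * e ^ 2 * (1 + l ^ 2)) by (field; lra). nra. }
      nra. }
  eapply Rle_trans; [apply Hmain |].
  replace (mu * (2 * e ^ 2 / (1 + e ^ 2 * l ^ 2)))
    with (4 * mu * e * (e / (2 * (1 + e ^ 2 * l ^ 2)))) by (field; lra).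
  apply Rmult_le_compat_l; [apply Rmult_le_pos; lra | apply atan_increment_ge; auto].
Qed.

Lemma sum_f_R0_telescope (h : nat -> R) n : sum_f_R0 (fun j => h (S j) - h j) n = h (S n) - h 0%nat.
Proof. induction n as [|n IH]; simpl; [ring | rewrite IH; ring]. Qed.

Lemma sum_f_R0_mult_l c (h : nat -> R) n : sum_f_R0 (fun j => c * h j) n = c * sum_f_R0 h n.
Proof. induction n as [|n IH]; simpl; [ring | rewrite IH; ring]. Qed.

Lemma sum_f_R0_indicator_le_1 p n : sum_f_R0 (fun i => if Nat.eqb i p then 1 else 0) n <= 1.
Proof.
  assert (E : forall m, sum_f_R0 (fun i => if Nat.eqb i p then 1 else 0) m
                        = if Nat.leb p m then 1 else 0).
  { induction m as [|m IH].
    - simpl. destruct p; reflexivity.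
    - rewrite tech5, IH.
      destruct (Nat.eqb_spec (S m) p), (Nat.leb_spec p m), (Nat.leb_spec p (S m)); try lia; ring. }
  rewrite E. destruct (Nat.leb p n); lra.
Qed.

Lemma fourier_abs2_ge_0 f k l : 0 <= fourier_abs2 f k l.
Proof.
  unfold fourier_abs2.
  pose proof (pow2_ge_0 (fourier_re f k l)). pose proof (pow2_ge_0 (fourier_im f k l)). lra.
Qed.

Section HminusOne.

Variables (f : R -> R -> R) (A a g e : R).
Hypotheses (He : 0 < e <= 1)
  (Hmodes : forall k l, (k <> 1)%Z -> (k <> -1)%Z -> fourier_abs2 f k l = 0)
  (Hunif : forall k l, fourier_abs2 f k l <= A ^ 2)
  (Hdecay : forall k l, fourier_abs2 f k l <= (e * (a + g * Rabs (IZR l))) ^ 2).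

Let mu := A ^ 2 + 2 * (a ^ 2 + g ^ 2).

Lemma Hm1_row_le k N : (k = 1 \/ k = -1)%Z ->
  sum_f_R0 (fun j => Hm1_term f k (Z.of_nat j - Z.of_nat N)%Z) (2 * N) <= 4 * mu * e * PI.
Proof.
  intros Hk. pose proof PI_RGT_0.
  assert (Hmu : 0 <= mu) by (unfold mu; nra).
  set (h := fun j : nat => atan (e * (IZR (Z.of_nat j - Z.of_nat N) - 1 / 2))).
  apply Rle_trans with (sum_f_R0 (fun j => 4 * mu * e * (h (S j) - h j)) (2 * N)).
  - apply sum_Rle. intros j _.
    unfold Hm1_term. replace (Z.eqb k 0) with false by (symmetry; apply Z.eqb_neq; lia).
    replace (IZR k ^ 2) with 1 by (destruct Hk as [-> | ->]; simpl; ring).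
    replace (h (S j) - h j) with (atan_increment e (IZR (Z.of_nat j - Z.of_nat N))).
    + apply weighted_coeff_le; auto using fourier_abs2_ge_0.
    + unfold h, atan_increment. rewrite Nat2Z.inj_succ.
      replace (Z.succ (Z.of_nat j) - Z.of_nat N)%Z with ((Z.of_nat j - Z.of_nat N) + 1)%Z by lia.
      rewrite plus_IZR. f_equal; f_equal; field.
  - rewrite sum_f_R0_mult_l, sum_f_R0_telescope. unfold h.
    pose proof (atan_bound (e * (IZR (Z.of_nat (S (2 * N)) - Z.of_nat N) - 1 / 2))).
    pose proof (atan_bound (e * (IZR (Z.of_nat 0 - Z.of_nat N) - 1 / 2))).
    apply Rmult_le_compat_l; [apply Rmult_le_pos; lra | lra].
Qed.

Lemma Hm1_partial_le N : Hm1_partial f N <= 8 * PI * mu * e.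
Proof.
  pose proof PI_RGT_0.
  assert (Hmu : 0 <= mu) by (unfold mu; nra).
  set (B := 4 * mu * e * PI).
  assert (HB : 0 <= B) by (unfold B; apply Rmult_le_pos; [apply Rmult_le_pos; [apply Rmult_le_pos |] |]; lra).
  unfold Hm1_partial.
  apply Rle_trans with (sum_f_R0 (fun i =>
    B * ((if Nat.eqb i (S N) then 1 else 0) + (if Nat.eqb i (N - 1) then 1 else 0))) (2 * N)).
  - apply sum_Rle. intros i _.
    destruct (Z.eq_dec (Z.of_nat i - Z.of_nat N) 1) as [E1 | E1];
      [| destruct (Z.eq_dec (Z.of_nat i - Z.of_nat N) (-1)) as [E2 | E2]].
    + replace (Nat.eqb i (S N)) with true by (symmetry; apply Nat.eqb_eq; lia).
      rewrite E1. eapply Rle_trans; [apply Hm1_row_le; auto | fold B].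
      destruct (Nat.eqb i (N - 1)); lra.
    + replace (Nat.eqb i (N - 1)) with true by (symmetry; apply Nat.eqb_eq; lia).
      rewrite E2. eapply Rle_trans; [apply Hm1_row_le; auto | fold B].
      destruct (Nat.eqb i (S N)); lra.
    + rewrite (sum_eq _ (fun _ => 0)).
      * rewrite sum_cte, Rmult_0_l.
        apply Rmult_le_pos; auto. destruct (Nat.eqb i (S N)), (Nat.eqb i (N - 1)); lra.
      * intros j _. unfold Hm1_term. destruct (andb _ _); auto.
        rewrite Hmodes by auto. unfold Rdiv; ring.
  - rewrite sum_f_R0_mult_l, plus_sum.
    pose proof (sum_f_R0_indicator_le_1 (S N) (2 * N)).
    pose proof (sum_f_R0_indicator_le_1 (N - 1) (2 * N)).
    apply Rle_trans with (B * 2); [apply Rmult_le_compat_l; lra | unfold B; lra].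
Qed.

End HminusOne.

Lemma Hm1_norm_le_of_partial f B : (forall N, Hm1_partial f N <= B) ->
  Rbar_le (Hm1_norm f) (Finite (sqrt B)).
Proof.
  intros HB. unfold Hm1_norm.
  assert (HL : Rbar_le (Lim_seq (Hm1_partial f)) (Finite B)).
  { rewrite <- (Lim_seq_const B). apply Lim_seq_le_loc. exists 0%nat. intros; apply HB. }
  destruct (Lim_seq (Hm1_partial f)) as [r | |]; simpl in HL |- *; auto.
  apply sqrt_le_1_alt. auto.
Qed.

(** * The H^1 norm *)

Section SeparatedH1.

Variables (A B dA dB : R -> R) (m p : R).
Hypotheses (HA : forall y, is_derive A y (dA y)) (HB : forall y, is_derive B y (dB y))
  (HdA : continuous_R dA) (HdB : continuous_R dB) (Hm : 0 <= m) (Hp : 0 <= p)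
  (BA : bounded_T A m) (BB : bounded_T B m) (BdA : bounded_T dA p) (BdB : bounded_T dB p).

Let rho x y := sin x * A y + cos x * B y.

Let continuous_A : continuous_R A.
Proof. apply continuous_R_of_derive; intros; eexists; apply HA. Qed.

Let continuous_B : continuous_R B.
Proof. apply continuous_R_of_derive; intros; eexists; apply HB. Qed.

Let Y1 := RInt (fun y => A y ^ 2 + B y ^ 2 + dA y ^ 2) (- PI) PI.
Let Y2 := RInt (fun y => A y ^ 2 + B y ^ 2 + dB y ^ 2) (- PI) PI.
Let Y3 := RInt (fun y => dA y * dB y) (- PI) PI.

(* [(sin x A + cos x B)^2 + (cos x A - sin x B)^2 = A^2 + B^2]. *)
Lemma RInt_H1_integrand_separated x :
  RInt (fun y => rho x y ^ 2 + Derive (fun x' => rho x' y) x ^ 2 + Derive (fun y' => rho x y') y ^ 2)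
    (- PI) PI
  = sin x ^ 2 * Y1 + cos x ^ 2 * Y2 + 2 * sin x * cos x * Y3.
Proof.
  pose proof continuous_A. pose proof continuous_B.
  rewrite (RInt_ext _ (fun y => sin x ^ 2 * (A y ^ 2 + B y ^ 2 + dA y ^ 2)
                              + cos x ^ 2 * (A y ^ 2 + B y ^ 2 + dB y ^ 2)
                              + 2 * sin x * cos x * (dA y * dB y))).
  - rewrite RInt_plus_R, RInt_plus_R, !RInt_scal_R by solve_ex_RInt. reflexivity.
  - intros y _. unfold rho.
    replace (Derive (fun x' => sin x' * A y + cos x' * B y) x) with (cos x * A y - sin x * B y)
      by (symmetry; apply is_derive_unique; auto_derive; auto; ring).
    replace (Derive (fun y' => sin x * A y' + cos x * B y') y) with (sin x * dA y + cos x * dB y).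
    + pose proof (sin2_cos2 x) as S. unfold Rsqr in S. simpl. nra.
    + symmetry; apply is_derive_unique.
      apply (is_derive_plus (fun y' => sin x * A y') (fun y' => cos x * B y'));
        apply (is_derive_scal (fun y' => _ y')); auto.
Qed.

Lemma Rabs_RInt_H1_integrand_le x :
  Rabs (sin x ^ 2 * Y1 + cos x ^ 2 * Y2 + 2 * sin x * cos x * Y3) <= 2 * PI * (2 * m ^ 2 + 2 * p ^ 2).
Proof.
  pose proof PI_RGT_0. pose proof continuous_A. pose proof continuous_B.
  assert (Hsq : forall z M, Rabs z <= M -> z ^ 2 <= M ^ 2)
    by (intros z M Hz; rewrite <- Rabs_sq; apply pow_incr; split; auto using Rabs_pos).
  assert (HY1 : Y1 <= 2 * PI * (2 * m ^ 2 + p ^ 2)).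
  { eapply Rle_trans; [apply Rle_abs |]. replace (2 * PI) with (PI - - PI) by ring.
    apply abs_RInt_le_const_R; [lra | solve_continuous |]. intros y Hy.
    pose proof (Hsq _ _ (BA y Hy)). pose proof (Hsq _ _ (BB y Hy)). pose proof (Hsq _ _ (BdA y Hy)).
    rewrite Rabs_right by nra. lra. }
  assert (HY2 : Y2 <= 2 * PI * (2 * m ^ 2 + p ^ 2)).
  { eapply Rle_trans; [apply Rle_abs |]. replace (2 * PI) with (PI - - PI) by ring.
    apply abs_RInt_le_const_R; [lra | solve_continuous |]. intros y Hy.
    pose proof (Hsq _ _ (BA y Hy)). pose proof (Hsq _ _ (BB y Hy)). pose proof (Hsq _ _ (BdB y Hy)).
    rewrite Rabs_right by nra. lra. }
  assert (HY3 : Rabs Y3 <= 2 * PI * p ^ 2).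
  { replace (2 * PI) with (PI - - PI) by ring.
    apply abs_RInt_le_const_R; [lra | solve_continuous |]. intros y Hy.
    rewrite Rabs_mult. pose proof (BdA y Hy). pose proof (BdB y Hy).
    replace (p ^ 2) with (p * p) by ring. apply Rmult_le_compat; auto using Rabs_pos. }
  pose proof (sin2_cos2 x) as S. unfold Rsqr in S.
  assert (0 <= Y1) by (apply RInt_ge_0; [lra | solve_ex_RInt | intros; nra]).
  assert (0 <= Y2) by (apply RInt_ge_0; [lra | solve_ex_RInt | intros; nra]).
  assert (Hsc : Rabs (2 * sin x * cos x) <= 1).
  { apply Rabs_le. pose proof (pow2_ge_0 (sin x - cos x)). pose proof (pow2_ge_0 (sin x + cos x)).
    split; nra. }
  assert (Hsc3 : Rabs (2 * sin x * cos x * Y3) <= 2 * PI * p ^ 2).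
  { rewrite Rabs_mult, <- (Rmult_1_l (2 * PI * p ^ 2)).
    apply Rmult_le_compat; auto using Rabs_pos. }
  assert (sin x ^ 2 * Y1 + cos x ^ 2 * Y2 <= 2 * PI * (2 * m ^ 2 + p ^ 2)) by nra.
  assert (0 <= sin x ^ 2 * Y1 + cos x ^ 2 * Y2) by nra.
  apply Rabs_le. pose proof (proj1 (Rabs_le_between _ _) Hsc3). split; nra.
Qed.

Lemma H1_norm_T2_separated : H1_norm_T2 rho <= 2 * PI * (2 * m + 2 * p).
Proof.
  pose proof PI_RGT_0.
  unfold H1_norm_T2. rewrite (RInt_ext _ _ _ _ (fun x _ => RInt_H1_integrand_separated x)).
  assert (Hout : RInt (fun x => sin x ^ 2 * Y1 + cos x ^ 2 * Y2 + 2 * sin x * cos x * Y3) (- PI) PI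
                 <= (2 * PI) ^ 2 * (2 * m ^ 2 + 2 * p ^ 2)).
  { eapply Rle_trans; [apply Rle_abs |].
    replace ((2 * PI) ^ 2) with ((PI - - PI) * (2 * PI)) by ring. rewrite Rmult_assoc.
    apply abs_RInt_le_const_R; [lra | solve_continuous |].
    intros; apply Rabs_RInt_H1_integrand_le. }
  apply Rle_trans with (sqrt ((2 * PI * (2 * m + 2 * p)) ^ 2)).
  - apply sqrt_le_1_alt. eapply Rle_trans; [apply Hout |].
    rewrite (Rpow_mult_distr (2 * PI)). apply Rmult_le_compat_l; [apply pow2_ge_0 | nra].
  - rewrite sqrt_pow2; [lra | nra].
Qed.

End SeparatedH1.

(** * Estimates for the transported solution *)

Lemma smooth1_bounded_T f : smooth1 f ->
  (forall y, ex_derive f y) /\ continuous_R (Derive f) /\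
  exists M K, 0 <= M /\ 0 <= K /\ bounded_T f M /\ bounded_T (Derive f) K.
Proof.
  intros Hf.
  assert (Hd : forall y, ex_derive f y) by exact (Hf 0%nat).
  assert (Hd' : continuous_R (Derive f)) by (apply continuous_R_of_derive; exact (Hf 1%nat)).
  split; [| split]; auto.
  destruct (continuous_R_bounded f (- PI) PI) as [M [HM BM]];
    [apply continuous_R_of_derive; auto |].
  destruct (continuous_R_bounded (Derive f) (- PI) PI) as [K [HK BK]]; auto.
  exists M, K. auto.
Qed.

Lemma sqrt_geometric_le_exp B t (n : nat) : 0 <= B -> 0 <= t -> t < (INR n + 1) * PI ->
  sqrt (B * (7 / 8) ^ n) <= sqrt (B * (8 / 7)) * exp (- (ln (8 / 7) / (2 * PI)) * t).
Proof.
  intros HB Ht Hn. pose proof PI_RGT_0.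
  set (L := ln (8 / 7)). assert (HL : 0 < L) by (unfold L; rewrite <- ln_1; apply ln_increasing; lra).
  assert (E1 : (7 / 8) ^ n = exp (- (INR n * L))).
  { rewrite <- Rpower_pow by lra. unfold Rpower. f_equal.
    replace (7 / 8) with (/ (8 / 7)) by field. rewrite ln_Rinv by lra. fold L. ring. }
  assert (E2 : (7 / 8) ^ n <= 8 / 7 * exp (- (L / (2 * PI)) * t) ^ 2).
  { rewrite E1, <- (exp_ln (8 / 7)) at 1 by lra. fold L.
    replace (exp (- (L / (2 * PI)) * t) ^ 2) with (exp (- (L / PI) * t))
      by (simpl; rewrite Rmult_1_r, <- exp_plus; f_equal; field; lra).
    rewrite <- exp_plus. apply exp_le_compat.
    assert (t / PI - 1 < INR n).
    { apply (Rmult_lt_reg_r PI); auto.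
      unfold Rdiv. rewrite Rmult_minus_distr_r, Rmult_assoc, Rinv_l by lra. lra. }
    replace (- (L / PI) * t) with (- (t / PI) * L) by (field; lra). nra. }
  apply Rle_trans with (sqrt (B * (8 / 7) * exp (- (L / (2 * PI)) * t) ^ 2)).
  - apply sqrt_le_1_alt. rewrite Rmult_assoc. apply Rmult_le_compat_l; auto.
  - rewrite sqrt_mult, sqrt_pow2 by (try apply pow2_ge_0; try apply Rlt_le, exp_pos; nra). lra.
Qed.

Section ShearedInitialData.

Variables (f0 g0 : R -> R) (Mf Kf Mg Kg : R).
Hypotheses (Df : forall y, ex_derive f0 y) (Dg : forall y, ex_derive g0 y)
  (Cf' : continuous_R (Derive f0)) (Cg' : continuous_R (Derive g0))
  (HMf : 0 <= Mf) (HKf : 0 <= Kf) (HMg : 0 <= Mg) (HKg : 0 <= Kg)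
  (Bf : bounded_T f0 Mf) (Bf' : bounded_T (Derive f0) Kf)
  (Bg : bounded_T g0 Mg) (Bg' : bounded_T (Derive g0) Kg).

Let Cf : continuous_R f0.
Proof. apply continuous_R_of_derive; auto. Qed.

Let Cg : continuous_R g0.
Proof. apply continuous_R_of_derive; auto. Qed.

Let Lf : lipschitz_T f0 Kf.
Proof. apply (lipschitz_T_of_is_derive _ (Derive f0)); auto. intros; apply Derive_correct; auto. Qed.

Let Lg : lipschitz_T g0 Kg.
Proof. apply (lipschitz_T_of_is_derive _ (Derive g0)); auto. intros; apply Derive_correct; auto. Qed.

Let amp_unif := 8 * PI * (Mf + Mg).
Let amp_0 := 2 * ((4 * PI * Mf + 288 * PI ^ 2 * (Kf + 2 * Mf))
                  + (4 * PI * Mg + 288 * PI ^ 2 * (Kg + 2 * Mg))).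
Let amp_1 := 2 * (288 * PI ^ 2 * Mf + 288 * PI ^ 2 * Mg).

Lemma fourier_abs2_sheared_flow_le n tau k l : 0 <= tau <= PI ->
  fourier_abs2 (sheared f0 g0 (flow_phase n tau)) k l <= amp_unif ^ 2 /\
  fourier_abs2 (sheared f0 g0 (flow_phase n tau)) k l
    <= ((7 / 8) ^ n * (amp_0 + amp_1 * Rabs (IZR l))) ^ 2.
Proof.
  intros Htau. pose proof PI_RGT_0.
  assert (HP : continuous_R (flow_phase n tau))
    by (pose proof (continuous_epoch_phase n); pose proof (continuous_pulse n);
        unfold flow_phase; solve_continuous).
  assert (Hpsi : forall c, continuous_R (fun y => flow_phase n tau y + c * y))
    by (intros; solve_continuous).
  pose proof (fourier_abs2_sheared_le f0 g0 (flow_phase n tau) k l Cf Cg HP) as Hle.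
  assert (Hosc : forall a Ka Ma c, continuous_R a -> 0 <= Ka -> 0 <= Ma ->
            lipschitz_T a Ka -> bounded_T a Ma ->
            0 <= osc_norm a (fun y => flow_phase n tau y + c * y) <= 4 * PI * Ma /\
            osc_norm a (fun y => flow_phase n tau y + c * y)
              <= (7 / 8) ^ n * (4 * PI * Ma + 288 * PI ^ 2 * (Ka + Ma * Rabs c + 2 * Ma))).
  { intros a Ka Ma c Ha HKa HMa La Ba. split; [split |].
    - apply osc_norm_ge_0.
    - apply osc_norm_le; auto.
    - apply osc_norm_flow_phase; auto. }
  destruct (Hosc f0 Kf Mf (- IZR l)) as [[F1 F1'] F1'']; auto.
  destruct (Hosc g0 Kg Mg (- IZR l)) as [[G1 G1'] G1'']; auto.
  destruct (Hosc f0 Kf Mf (- - IZR l)) as [[F2 F2'] F2'']; auto.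
  destruct (Hosc g0 Kg Mg (- - IZR l)) as [[G2 G2'] G2'']; auto.
  rewrite !Rabs_Ropp in *.
  split; (eapply Rle_trans; [apply Hle | apply pow_incr; split; [lra |]]).
  - unfold amp_unif. lra.
  - unfold amp_0, amp_1. lra.
Qed.

Let B := 8 * PI * (amp_unif ^ 2 + 2 * (amp_0 ^ 2 + amp_1 ^ 2)).

Lemma Hm1_norm_sheared_flow_le n tau : 0 <= tau <= PI ->
  Rbar_le (Hm1_norm (sheared f0 g0 (flow_phase n tau))) (Finite (sqrt (B * (7 / 8) ^ n))).
Proof.
  intros Htau. pose proof PI_RGT_0.
  assert (He : 0 < (7 / 8) ^ n <= 1)
    by (split; [apply pow_lt; lra | rewrite <- (pow1 n); apply pow_incr; lra]).
  assert (HP : continuous_R (flow_phase n tau))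
    by (pose proof (continuous_epoch_phase n); pose proof (continuous_pulse n);
        unfold flow_phase; solve_continuous).
  apply Hm1_norm_le_of_partial. intros N.
  eapply Rle_trans; [apply (Hm1_partial_le _ amp_unif amp_0 amp_1 ((7 / 8) ^ n)) |].
  - exact He.
  - intros k l Hk1 Hk2. apply fourier_abs2_sheared_eq_0; auto.
  - intros k l. apply (fourier_abs2_sheared_flow_le n tau k l Htau).
  - intros k l. apply (fourier_abs2_sheared_flow_le n tau k l Htau).
  - right. unfold B. ring.
Qed.

Lemma Rabs_trig_comb_le u v a :
  Rabs (u * cos a + v * sin a) <= Rabs u + Rabs v /\ Rabs (u * cos a - v * sin a) <= Rabs u + Rabs v.
Proof.
  assert (Rabs (cos a) <= 1) by apply Rabs_le, COS_bound.
  assert (Rabs (sin a) <= 1) by apply Rabs_le, SIN_bound.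
  pose proof (Rabs_pos u). pose proof (Rabs_pos v).
  assert (Rabs u * Rabs (cos a) <= Rabs u) by (pose proof (Rabs_pos (cos a)); nra).
  assert (Rabs v * Rabs (sin a) <= Rabs v) by (pose proof (Rabs_pos (sin a)); nra).
  split.
  - eapply Rle_trans; [apply Rabs_triang |]. rewrite !Rabs_mult. lra.
  - eapply Rle_trans; [apply Rabs_triang |]. rewrite Rabs_Ropp, !Rabs_mult. lra.
Qed.

(* [sheared f0 g0 P = sin x A + cos x B], where [(A, B)] is [(f0, g0)] rotated by the angle [P]. *)
Lemma H1_norm_T2_sheared_le P dP Lam :
  (forall y, is_derive P y (dP y)) -> continuous_R dP -> 0 <= Lam -> bounded_T dP Lam ->
  H1_norm_T2 (sheared f0 g0 P) <= 2 * PI * (2 * (Mf + Mg) + 2 * (Kf + Kg + (Mf + Mg) * Lam)).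
Proof.
  intros HP CdP HLam BdP.
  assert (CP : continuous_R P) by (apply continuous_R_of_derive; intros; eexists; apply HP).
  assert (HdP : forall y, Derive P y = dP y) by (intros; apply is_derive_unique, HP).
  set (A := fun y => f0 y * cos (P y) + g0 y * sin (P y)).
  set (Bc := fun y => g0 y * cos (P y) - f0 y * sin (P y)).
  set (dA := fun y => Derive f0 y * cos (P y) + Derive g0 y * sin (P y) + dP y * Bc y).
  set (dB := fun y => Derive g0 y * cos (P y) - Derive f0 y * sin (P y) - dP y * A y).
  replace (sheared f0 g0 P) with (fun x y => sin x * A y + cos x * Bc y).
  2:{ apply functional_extensionality; intros x; apply functional_extensionality; intros y.
      unfold sheared, A, Bc. rewrite sin_minus, cos_minus. ring. }
  assert (BA : bounded_T A (Mf + Mg) /\ bounded_T Bc (Mf + Mg)).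
  { split; intros y Hy; pose proof (Bf y Hy); pose proof (Bg y Hy);
      destruct (Rabs_trig_comb_le (f0 y) (g0 y) (P y)) as [T1 T2];
      destruct (Rabs_trig_comb_le (g0 y) (f0 y) (P y)) as [T3 T4]; unfold A, Bc; lra. }
  destruct BA as [BA BB].
  assert (Hprod : forall y, - PI <= y <= PI -> forall u, bounded_T u (Mf + Mg) ->
            Rabs (dP y * u y) <= (Mf + Mg) * Lam).
  { intros y Hy u Hu. rewrite Rabs_mult, Rmult_comm.
    apply Rmult_le_compat; auto using Rabs_pos. }
  apply (H1_norm_T2_separated A Bc dA dB); [| | | | lra | nra | exact BA | exact BB | |].
  - intros y. unfold A, dA, Bc. auto_derive; [repeat split; auto; eexists; apply HP |].
    rewrite HdP. change (Derive (fun x => f0 x) y) with (Derive f0 y).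
    change (Derive (fun x => g0 x) y) with (Derive g0 y). ring.
  - intros y. unfold Bc, dB, A. auto_derive; [repeat split; auto; eexists; apply HP |].
    rewrite HdP. change (Derive (fun x => f0 x) y) with (Derive f0 y).
    change (Derive (fun x => g0 x) y) with (Derive g0 y). ring.
  - unfold dA, Bc. solve_continuous.
  - unfold dB, A. solve_continuous.
  - intros y Hy. unfold dA; cbv beta. pose proof (Bf' y Hy). pose proof (Bg' y Hy).
    destruct (Rabs_trig_comb_le (Derive f0 y) (Derive g0 y) (P y)) as [T1 _].
    pose proof (Hprod y Hy Bc BB). eapply Rle_trans; [apply Rabs_triang | lra].
  - intros y Hy. unfold dB; cbv beta. pose proof (Bf' y Hy). pose proof (Bg' y Hy).
    destruct (Rabs_trig_comb_le (Derive g0 y) (Derive f0 y) (P y)) as [_ T2].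
    pose proof (Hprod y Hy A BA). unfold Rminus at 1.
    eapply Rle_trans; [apply Rabs_triang |]. rewrite Rabs_Ropp. lra.
Qed.

Lemma H1_norm_T2_sheared_flow_le n tau : 0 <= tau <= PI ->
  H1_norm_T2 (sheared f0 g0 (flow_phase n tau))
    <= 2 * PI * (2 * (Mf + Mg) + 2 * (Kf + Kg + (Mf + Mg) * (PI * INR (freq n)))).
Proof.
  intros Htau. pose proof PI_RGT_0. pose proof (pos_INR (freq n)).
  apply (H1_norm_T2_sheared_le _ (flow_phase_deriv n tau)).
  - intros; apply is_derive_flow_phase.
  - apply continuous_flow_phase_deriv.
  - nra.
  - intros y _; apply Rabs_flow_phase_deriv_le; auto.
Qed.

Lemma Hm1_norm_sheared_displacement_decay : exists C beta, 0 < C /\ 0 < beta /\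
  forall t, 0 <= t -> Rbar_le (Hm1_norm (sheared f0 g0 (displacement t))) (Finite (C * exp (- beta * t))).
Proof.
  pose proof PI_RGT_0.
  assert (HB : 0 <= B) by (unfold B; nra).
  exists (sqrt (B * (8 / 7)) + 1), (ln (8 / 7) / (2 * PI)).
  pose proof (sqrt_pos (B * (8 / 7))).
  split; [lra | split; [apply Rdiv_lt_0_compat; [rewrite <- ln_1; apply ln_increasing |]; lra |]].
  intros t Ht. pose proof (epoch_spec t Ht).
  eapply Rbar_le_trans; [apply Hm1_norm_sheared_flow_le; lra |].
  simpl. eapply Rle_trans; [apply (sqrt_geometric_le_exp _ t); auto; lra |].
  pose proof (exp_pos (- (ln (8 / 7) / (2 * PI)) * t)). nra.
Qed.

Lemma H1_norm_T2_sheared_displacement_growth : exists C, 0 < C /\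
  forall t, 0 <= t -> H1_norm_T2 (sheared f0 g0 (displacement t)) <= C * exp (ln 64 * IZR (ceil t) ^ 2).
Proof.
  pose proof PI_RGT_0.
  set (m := Mf + Mg). set (K := Kf + Kg).
  exists (4 * PI * (m + K) + 4 * PI ^ 2 * m + 1).
  split; [unfold m, K; nra |].
  intros t Ht. pose proof (epoch_spec t Ht).
  eapply Rle_trans; [apply H1_norm_T2_sheared_flow_le; lra |]. fold m K.
  pose proof (freq_epoch_le t Ht). set (E := exp (ln 64 * IZR (ceil t) ^ 2)) in *.
  assert (HE : 1 <= E).
  { unfold E. rewrite <- exp_0. apply exp_le_compat, Rmult_le_pos; [| apply pow2_ge_0].
    left; rewrite <- ln_1; apply ln_increasing; lra. }
  assert (Hm : 0 <= m) by (unfold m; lra). assert (HK : 0 <= K) by (unfold K; lra).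
  assert (4 * PI * (m + K) <= 4 * PI * (m + K) * E).
  { rewrite <- (Rmult_1_r (4 * PI * (m + K))) at 1. apply Rmult_le_compat_l; nra. }
  assert (PI ^ 2 * m * INR (freq (epoch t)) <= PI ^ 2 * m * E)
    by (apply Rmult_le_compat_l; [apply Rmult_le_pos |]; nra).
  nra.
Qed.

End ShearedInitialData.

Theorem theorem3p1 (f0 g0 : R -> R) :
  smooth1 f0 -> smooth1 g0 -> periodic2pi f0 -> periodic2pi g0 ->
  exists (C0 C1 C2 beta1 beta2 beta3 : R) (U : R -> R -> R),
    0 < C0 /\ 0 < C1 /\ 0 < C2 /\ 0 < beta1 /\ 0 < beta2 /\ 0 < beta3 /\
    (* U(t,.) is smooth and 2pi-periodic in y; t -> U(t,y) is integrable *)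
    (forall t, smooth1 (U t) /\ periodic2pi (U t)) /\
    (forall y a b, ex_RInt (fun s => U s y) a b) /\
    (* ||U||_{L^infty} <= 1 *)
    (forall t y, Rabs (U t y) <= 1) /\
    (forall t, 0 <= t ->
       H1_norm_T (U t) <= C0 * exp (beta1 * IZR (ceil t) ^ 2)) /\
    (forall rho : R -> R -> R -> R,
       transport_solution U (fun x y => f0 y * sin x + g0 y * cos x) rho ->
       forall t, 0 <= t ->
         Rbar_le (Hm1_norm (rho t)) (Finite (C1 * exp (- beta2 * t))) /\
         H1_norm_T2 (rho t) <= C2 * exp (beta3 * IZR (ceil t) ^ 2)).
Proof.
  intros Sf Sg _ _.
  destruct (smooth1_bounded_T f0 Sf) as [Df [Cf' [Mf [Kf [HMf [HKf [Bf Bf']]]]]]].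
  destruct (smooth1_bounded_T g0 Sg) as [Dg [Cg' [Mg [Kg [HMg [HKg [Bg Bg']]]]]]].
  destruct (Hm1_norm_sheared_displacement_decay f0 g0 Mf Kf Mg Kg)
    as [C1 [beta2 [HC1 [Hbeta2 Hdecay]]]]; auto.
  destruct (H1_norm_T2_sheared_displacement_growth f0 g0 Mf Kf Mg Kg)
    as [C2 [HC2 Hgrowth]]; auto.
  assert (Hln : 0 < ln 64) by (rewrite <- ln_1; apply ln_increasing; lra).
  exists 6, C1, C2, (ln 64), beta2, (ln 64), velocity.
  do 6 (split; [lra |]).
  split; [intros; split; [apply smooth1_velocity | apply periodic2pi_velocity] |].
  split; [apply ex_RInt_velocity |].
  split; [apply Rabs_velocity_le_1 |].
  split; [apply H1_norm_T_velocity |].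
  intros rho Hrho t Ht. rewrite (transport_solution_velocity _ _ t Hrho Ht).
  split; [apply Hdecay | apply Hgrowth]; auto.
Qed.
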